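(* With $A(\delta,\epsilon)$ the lobe area and $\nu=(1-\sqrt\delta)/(1+\sqrt\delta)$, the first-order coefficient $\lim_{\epsilon\to0}A(\delta,\epsilon)/\epsilon=\Gamma(\nu)$ satisfies $$\Gamma\!\left(\frac{1-\sqrt\delta}{1+\sqrt\delta}\right)\sim\frac{4\pi^2}{\delta}\exp\!\left(\frac{-\pi^2}{2\sqrt\delta}\right)\quad\text{as }\delta\to0^+,$$ so that $A(\delta,\epsilon)=\epsilon\,\Gamma(\nu)+O(\epsilon^2)$ with $\Gamma(\nu)$ exponentially small in $\delta^{-1/2}$.
   Context: $\Gamma(\nu)=1+8\sum_{k=1}^{\infty}\frac{(-1)^k k\,\nu^k}{1+\nu^k}$. $A(\delta,\epsilon)$ denotes the area of the lobe bounded by the stable and unstable manifolds of $z_a=(-\tfrac12,0)$, $z_b=(\tfrac12,0)$ for the twist map generated by $\tfrac12(\theta'-\theta)^2+V_\delta(\theta)+\epsilon\cos^2(\pi\theta)$, $V_\delta(\theta)=-\frac{2}{\pi}\int_0^\theta\arctan\!\left(\frac{\delta\sin(2\pi t)}{1+\delta\cos(2\pi t)}\right)dt$, and it satisfies $A=\epsilon\Gamma(\nu)+O(\epsilon^2)$ as $\epsilon\to0$. *)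

From Stdlib Require Import Reals.
From Coquelicot Require Import Coquelicot.
Open Scope R_scope.

(* Gamma(nu) = 1 + 8 * sum_{k>=1} (-1)^k k nu^k / (1 + nu^k);
   the series is reindexed with k = n+1, n >= 0. *)
Definition Gamma_term (nu : R) (n : nat) : R :=
  (-1) ^ (S n) * INR (S n) * nu ^ (S n) / (1 + nu ^ (S n)).

Definition Gamma (nu : R) : R := 1 + 8 * Series (Gamma_term nu).

Definition nu_of (delta : R) : R := (1 - sqrt delta) / (1 + sqrt delta).

Definition Gamma_asymp (delta : R) : R :=
  4 * PI ^ 2 / delta * exp (- PI ^ 2 / (2 * sqrt delta)).

(* With [a = artanh (sqrt delta)] one has [nu = exp (-2 a)].  Expanding
   [q^k / (1 + q^k)] geometrically turns the Lambert series [Gamma (exp (-2 a))]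
   into [1 - 4 sum_j (-1)^j / (cosh (2 (j + 1) a) + 1)]; the partial fractions
   [1 / (cosh (2 x) + 1) = sum_n Re (pi (n + 1/2) + i x)^-2], an exchange of the
   two summations (Tannery) and the alternating lattice sum in the other variable
   give the modular transformation
     [Gamma (exp (-2 a)) = 2 (pi / a)^2 sum_n cosh b_n / sinh b_n ^ 2],
   [b_n = (2 n + 1) pi^2 / (2 a)].  Its first term [4 (pi / a)^2 exp (- pi^2 / (2 a))]
   dominates, and [a = sqrt delta + O(delta^(3/2))] yields the asymptotics.
   All partial fractions come from the lattice sum
     [sum_k Re (Y + i (t + 2 k pi))^-2 = Re (1 / (4 sinh ((Y + i t) / 2) ^ 2))]:
   the difference of the two sides is bounded for bounded [Y], [2 pi]-periodic in
   [t], and satisfies [E Y t + E Y (t + pi) = 4 E (2 Y) (2 t)], hence vanishes. *)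

From Stdlib Require Import Reals Lra Lia ZArith.
From Coquelicot Require Import Coquelicot.
Open Scope R_scope.

Lemma ex_series_Rabs_le (a b : nat -> R) :
  (forall n, Rabs (a n) <= b n) -> ex_series b -> ex_series a.
Proof. exact (@ex_series_le R_AbsRing R_CompleteNormedModule a b). Qed.

Lemma ex_series_abs_le (a b : nat -> R) :
  (forall n, Rabs (a n) <= b n) -> ex_series b -> ex_series (fun n => Rabs (a n)).
Proof. intros H; apply ex_series_Rabs_le; intros n; rewrite Rabs_Rabsolu; apply H. Qed.

Lemma Series_split (a : nat -> R) N : ex_series a ->
  Series a = sum_f_R0 a N + Series (fun k => a (S N + k)%nat).
Proof. intros E; rewrite (Series_incr_n a (S N)) by (lia || auto); reflexivity. Qed.

Lemma Series_nonneg (a : nat -> R) : (forall n, 0 <= a n) -> ex_series a -> 0 <= Series a.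
Proof.
  intros H E. rewrite <- (Rmult_0_l (Series a)), <- Series_scal_l.
  apply Series_le; auto. intros n; rewrite Rmult_0_l; split; [lra | auto].
Qed.

Lemma sum_f_R0_le_Series (a : nat -> R) N :
  (forall n, 0 <= a n) -> ex_series a -> sum_f_R0 a N <= Series a.
Proof.
  intros H E. rewrite (Series_split a N E).
  enough (0 <= Series (fun k => a (S N + k)%nat)) by lra.
  apply Series_nonneg; [auto | now apply ex_series_incr_n].
Qed.

Lemma ex_series_bounded_sums (a : nat -> R) M :
  (forall n, 0 <= a n) -> (forall N, sum_f_R0 a N <= M) -> ex_series a.
Proof.
  intros H HM.
  destruct (ex_finite_lim_seq_incr (sum_n a) M) as [l Hl].
  - intros n; rewrite sum_Sn; simpl; unfold plus; simpl; specialize (H (S n)); lra.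
  - intros n; rewrite sum_n_Reals; auto.
  - now exists l.
Qed.

Lemma Series_le_of_sums_le (a : nat -> R) M :
  ex_series a -> (forall N, sum_f_R0 a N <= M) -> Series a <= M.
Proof.
  intros E HM.
  assert (Hs : is_lim_seq (sum_n a) (Series a)) by exact (Series_correct _ E).
  apply (is_lim_seq_le _ (fun _ => M) _ _ (fun N => ltac:(rewrite sum_n_Reals; apply HM)) Hs (is_lim_seq_const M)).
Qed.

Lemma Rabs_Series_le_head_tail (d g : nat -> R) N :
  (forall k, Rabs (d k) <= g k) -> ex_series g ->
  Rabs (Series d) <= Rabs (sum_f_R0 d N) + Series (fun k => g (S N + k)%nat).
Proof.
  intros Hdg Eg.
  assert (Ed : ex_series (fun k => Rabs (d k))) by exact (ex_series_abs_le d g Hdg Eg).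
  rewrite (Series_split d N) by now apply ex_series_Rabs.
  eapply Rle_trans; [apply Rabs_triang | apply Rplus_le_compat_l].
  eapply Rle_trans; [apply Series_Rabs; now apply (ex_series_incr_n (fun k => Rabs (d k)))|].
  apply Series_le; [intros k; split; [apply Rabs_pos | apply Hdg] | now apply ex_series_incr_n].
Qed.

Lemma is_lim_seq_sum_f_R0 (b : nat -> nat -> R) (f : nat -> R) N :
  (forall k, is_lim_seq (fun M => b M k) (f k)) ->
  is_lim_seq (fun M => sum_f_R0 (b M) N) (sum_f_R0 f N).
Proof.
  intros Hl; induction N as [|N IH]; simpl; [apply Hl | exact (is_lim_seq_plus' _ _ _ _ IH (Hl (S N)))].
Qed.

Lemma Series_tail_small (h : nat -> R) (eps : posreal) :
  ex_series h -> exists N, Series (fun k => h (S N + k)%nat) < eps.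
Proof.
  intros Eh.
  assert (Hs : is_lim_seq (sum_n h) (Series h)) by exact (Series_correct _ Eh).
  apply is_lim_seq_spec in Hs. destruct (Hs eps) as [N HN].
  exists N. specialize (HN N (Nat.le_refl _)). rewrite sum_n_Reals, (Series_split h N Eh) in HN.
  apply Rabs_def2 in HN. lra.
Qed.

Lemma Rabs_le_of_is_lim_seq (u : nat -> R) (l c : R) :
  is_lim_seq u l -> (forall n, Rabs (u n) <= c) -> Rabs l <= c.
Proof. intros Hu Hc. exact (is_lim_seq_le _ (fun _ => c) _ _ Hc (is_lim_seq_abs _ _ Hu) (is_lim_seq_const _)). Qed.

Lemma tannery (b : nat -> nat -> R) (f h : nat -> R) :
  (forall k, is_lim_seq (fun M => b M k) (f k)) ->
  (forall M k, Rabs (b M k) <= h k) -> ex_series h ->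
  is_lim_seq (fun M => Series (b M)) (Series f).
Proof.
  intros Hl Hb Eh.
  assert (Hf : forall k, Rabs (f k) <= h k)
    by (intros k; exact (Rabs_le_of_is_lim_seq _ _ _ (Hl k) (fun M => Hb M k))).
  apply is_lim_seq_spec; intros eps.
  destruct (Series_tail_small h (pos_div_2 (pos_div_2 eps)) Eh) as [N HN].
  change (pos (pos_div_2 (pos_div_2 eps))) with (eps / 2 / 2) in HN.
  assert (Hfin := is_lim_seq_sum_f_R0 b f N Hl).
  apply is_lim_seq_spec in Hfin. destruct (Hfin (pos_div_2 eps)) as [M0 HM0].
  exists M0; intros M HM; specialize (HM0 M HM); simpl in HM0.
  assert (Hd : forall k, Rabs (b M k - f k) <= 2 * h k).
  { intros k. unfold Rminus. eapply Rle_trans; [apply Rabs_triang|].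
    rewrite Rabs_Ropp. specialize (Hb M k). specialize (Hf k). lra. }
  assert (E2h : ex_series (fun k => 2 * h k)) by exact (ex_series_scal_l 2 h Eh).
  rewrite <- Series_minus by (apply (ex_series_Rabs_le _ h); auto).
  eapply Rle_lt_trans; [exact (Rabs_Series_le_head_tail _ _ N Hd E2h)|].
  rewrite minus_sum, Series_scal_l. lra.
Qed.

Lemma sum_f_R0_even_odd (h : nat -> R) n :
  sum_f_R0 h (S (2 * n)) =
  sum_f_R0 (fun k => h (2 * k)%nat) n + sum_f_R0 (fun k => h (S (2 * k))) n.
Proof.
  induction n as [|n IH]; [simpl; ring|].
  replace (S (2 * S n)) with (S (S (S (2 * n)))) by lia.
  change (sum_f_R0 h (S (S (S (2 * n)))))
    with (sum_f_R0 h (S (2 * n)) + h (S (S (2 * n))) + h (S (S (S (2 * n))))).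
  rewrite IH.
  change (sum_f_R0 (fun k => h (2 * k)%nat) (S n))
    with (sum_f_R0 (fun k => h (2 * k)%nat) n + h (2 * S n)%nat).
  change (sum_f_R0 (fun k => h (S (2 * k))) (S n))
    with (sum_f_R0 (fun k => h (S (2 * k))) n + h (S (2 * S n))).
  replace (2 * S n)%nat with (S (S (2 * n))) by lia. ring.
Qed.

Lemma Series_even_odd (h : nat -> R) : ex_series (fun n => Rabs (h n)) ->
  Series h = Series (fun n => h (2 * n)%nat) + Series (fun n => h (S (2 * n))).
Proof.
  intros Ea.
  set (A := Series (fun n => Rabs (h n))).
  assert (Hpos : forall g : nat -> R, forall N, 0 <= sum_f_R0 (fun n => Rabs (g n)) N)
    by (intros g N; apply cond_pos_sum; intros; apply Rabs_pos).
  assert (Hsum : forall N, sum_f_R0 (fun n => Rabs (h n)) (S (2 * N)) <= A)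
    by (intros N; apply sum_f_R0_le_Series; auto; intros; apply Rabs_pos).
  assert (E1 : ex_series (fun n => h (2 * n)%nat)).
  { apply ex_series_Rabs, (ex_series_bounded_sums _ A); [intros; apply Rabs_pos|].
    intros N. specialize (Hsum N). rewrite sum_f_R0_even_odd in Hsum.
    specialize (Hpos (fun k => h (S (2 * k))) N). lra. }
  assert (E2 : ex_series (fun n => h (S (2 * n)))).
  { apply ex_series_Rabs, (ex_series_bounded_sums _ A); [intros; apply Rabs_pos|].
    intros N. specialize (Hsum N). rewrite sum_f_R0_even_odd in Hsum.
    specialize (Hpos (fun k => h (2 * k)%nat) N). lra. }
  assert (Hs : is_lim_seq (sum_n h) (Series h))
    by exact (Series_correct _ (ex_series_Rabs _ Ea)).
  apply (is_lim_seq_subseq _ _ (fun n => S (2 * n))) in Hs.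
  2:{ intros P [N HN]. exists N. intros n Hn. apply HN. lia. }
  assert (Hp := is_lim_seq_plus' _ _ _ _ (Series_correct _ E1) (Series_correct _ E2)).
  apply (is_lim_seq_ext _ (fun n => sum_n (fun n => h (2 * n)%nat) n + sum_n (fun n => h (S (2 * n))) n)) in Hs.
  2:{ intros n; rewrite !sum_n_Reals; apply sum_f_R0_even_odd. }
  apply Rbar_finite_eq. rewrite <- (is_lim_seq_unique _ _ Hs). exact (is_lim_seq_unique _ _ Hp).
Qed.

Lemma Series_sum_f_R0 (c : nat -> nat -> R) M : (forall j, ex_series (c j)) ->
  Series (fun k => sum_f_R0 (fun j => c j k) M) = sum_f_R0 (fun j => Series (c j)) M.
Proof.
  intros E. induction M as [|M IH]; simpl; [reflexivity|].
  rewrite Series_plus, IH; auto.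
  clear IH; induction M as [|M IH]; simpl; [exact (E 0%nat) | exact (ex_series_plus _ _ IH (E (S M)))].
Qed.

Lemma alternating_sum_bound (p : nat -> R) M :
  (forall m, 0 <= p (S m) <= p m) -> 0 <= p 0%nat ->
  0 <= sum_f_R0 (fun m => (-1) ^ m * p m) M <= p 0%nat.
Proof.
  intros Hp H0.
  assert (Hpos : forall k, 0 <= p k) by (intros k; induction k; auto; specialize (Hp k); lra).
  revert p Hp H0 Hpos; induction M as [|M IH]; intros p Hp H0 Hpos.
  - simpl. lra.
  - rewrite decomp_sum by lia. simpl pred.
    rewrite (sum_eq _ (fun i => (-1) ^ i * p (S i) * -1)) by (intros i _; simpl; ring).
    rewrite <- scal_sum.
    destruct (IH (fun i => p (S i))) as [I1 I2]; auto.
    specialize (Hp 0%nat); simpl; lra.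
Qed.

Lemma Rabs_alternating_sum_le (p : nat -> R) M :
  (forall m, 0 <= p (S m) <= p m) -> 0 <= p 0%nat ->
  Rabs (sum_f_R0 (fun m => (-1) ^ m * p m) M) <= p 0%nat.
Proof.
  intros Hp H0. destruct (alternating_sum_bound p M Hp H0). rewrite Rabs_right; lra.
Qed.

Lemma le_of_derive_nonneg (f df : R -> R) a b : a <= b ->
  (forall x, a <= x <= b -> is_derive f x (df x)) ->
  (forall x, a <= x <= b -> 0 <= df x) -> f a <= f b.
Proof.
  intros Hab Hd Hp.
  destruct (MVT_gen f a b df) as [c [Hc Heq]].
  - intros x Hx. rewrite Rmin_left, Rmax_right in Hx by lra. apply Hd; lra.
  - intros x Hx. rewrite Rmin_left, Rmax_right in Hx by lra.
    apply continuity_pt_filterlim, (@ex_derive_continuous R_AbsRing R_NormedModule).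
    exists (df x). apply Hd; lra.
  - rewrite Rmin_left, Rmax_right in Hc by lra. specialize (Hp c Hc). nra.
Qed.

Lemma exp_mul_exp_opp x : exp x * exp (- x) = 1.
Proof. rewrite <- exp_plus, Rplus_opp_r. apply exp_0. Qed.

Lemma cosh_sq x : cosh x ^ 2 = 1 + sinh x ^ 2.
Proof.
  unfold cosh, sinh. pose proof (exp_mul_exp_opp x) as H.
  transitivity (1 + ((exp x - exp (- x)) / 2) ^ 2 + (exp x * exp (- x) - 1)); [field | rewrite H; ring].
Qed.

Lemma cosh_ge_1 x : 1 <= cosh x.
Proof.
  unfold cosh. pose proof (exp_mul_exp_opp x). pose proof (exp_pos x). pose proof (exp_pos (- x)).
  pose proof (pow2_ge_0 (exp x - exp (- x))). nra.
Qed.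

Lemma cosh_double_sub_1 x : cosh (2 * x) - 1 = 2 * sinh x ^ 2.
Proof.
  unfold cosh, sinh. replace (2 * x) with (x + x) by ring. replace (- (x + x)) with (- x + - x) by ring.
  rewrite !exp_plus. pose proof (exp_mul_exp_opp x) as H.
  transitivity (2 * ((exp x - exp (- x)) / 2) ^ 2 + (exp x * exp (- x) - 1)); [field | rewrite H; ring].
Qed.

Lemma cosh_double x : cosh (2 * x) = 2 * cosh x ^ 2 - 1.
Proof. pose proof (cosh_double_sub_1 x). pose proof (cosh_sq x). lra. Qed.

Lemma is_derive_cosh x : is_derive cosh x (sinh x).
Proof. unfold cosh, sinh. auto_derive; auto. field. Qed.

Lemma sinh_ge_id x : 0 <= x -> x <= sinh x.
Proof.
  intros Hx. enough (sinh 0 - 0 <= sinh x - x) by (rewrite sinh_0 in *; lra).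
  apply (le_of_derive_nonneg (fun y => sinh y - y) (fun y => cosh y - 1)); auto.
  - intros y _. unfold cosh, sinh. auto_derive; auto. field.
  - intros y _. pose proof (cosh_ge_1 y); lra.
Qed.

Lemma sinh_le_mul_cosh x : 0 <= x -> sinh x <= x * cosh x.
Proof.
  intros Hx. enough (0 * cosh 0 - sinh 0 <= x * cosh x - sinh x) by (rewrite sinh_0 in *; lra).
  apply (le_of_derive_nonneg (fun y => y * cosh y - sinh y) (fun y => y * sinh y)); auto.
  - intros y _. unfold cosh, sinh. auto_derive; auto. field.
  - intros y Hy. pose proof (sinh_ge_id y (proj1 Hy)). nra.
Qed.

Lemma cosh_le_compat x y : 0 <= x <= y -> cosh x <= cosh y.
Proof.
  intros H. apply (le_of_derive_nonneg cosh sinh); try lra.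
  - intros; apply is_derive_cosh.
  - intros z Hz. pose proof (sinh_ge_id z); lra.
Qed.

Lemma cosh_sub_1_bounds Y Y0 : 0 <= Y <= Y0 ->
  Y ^ 2 / 2 <= cosh Y - 1 <= Y ^ 2 / 2 + (Y ^ 2 / 2) ^ 2 * cosh (Y0 / 2) ^ 2 / 2.
Proof.
  intros HY. set (x := Y / 2). replace Y with (2 * x) by (unfold x; field).
  rewrite cosh_double_sub_1.
  assert (Hx : 0 <= x) by (unfold x; lra).
  pose proof (sinh_ge_id x Hx). pose proof (sinh_le_mul_cosh x Hx).
  pose proof (cosh_sq x). pose proof (cosh_ge_1 x).
  assert (Hc : cosh x <= cosh (Y0 / 2)) by (apply cosh_le_compat; unfold x; lra).
  assert (sinh x ^ 2 <= x ^ 2 * cosh x ^ 2) by nra.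
  assert (x ^ 2 <= sinh x ^ 2) by nra.
  assert (cosh x ^ 2 <= cosh (Y0 / 2) ^ 2) by nra.
  split; [nra|].
  assert (sinh x ^ 2 <= x ^ 2 + x ^ 2 * (x ^ 2 * cosh x ^ 2)) by nra.
  assert (x ^ 2 * (x ^ 2 * cosh x ^ 2) <= x ^ 2 * (x ^ 2 * cosh (Y0 / 2) ^ 2)).
  { apply Rmult_le_compat_l; [nra|]. apply Rmult_le_compat_l; nra. }
  nra.
Qed.

Lemma cosh_gt_1 Y : 0 < Y -> 1 < cosh Y.
Proof. intros HY. destruct (cosh_sub_1_bounds Y Y ltac:(lra)). nra. Qed.

Lemma cos_ge_quadratic x : 0 <= x -> 1 - x ^ 2 / 2 <= cos x.
Proof.
  intros Hx. enough (cos 0 - 1 + 0 ^ 2 / 2 <= cos x - 1 + x ^ 2 / 2) by (rewrite cos_0 in *; lra).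
  apply (le_of_derive_nonneg (fun y => cos y - 1 + y ^ 2 / 2) (fun y => - sin y + y)); auto.
  - intros y _. auto_derive; auto. field.
  - intros y Hy. destruct (Req_dec y 0) as [->|]; [rewrite sin_0; lra|].
    pose proof (sin_lt_x y ltac:(lra)). lra.
Qed.

Lemma sin_ge_cubic x : 0 <= x -> x - x ^ 3 / 6 <= sin x.
Proof.
  intros Hx. enough (sin 0 - 0 + 0 ^ 3 / 6 <= sin x - x + x ^ 3 / 6) by (rewrite sin_0 in *; lra).
  apply (le_of_derive_nonneg (fun y => sin y - y + y ^ 3 / 6) (fun y => cos y - 1 + y ^ 2 / 2)); auto.
  - intros y _. auto_derive; auto. field.
  - intros y Hy. pose proof (cos_ge_quadratic y (proj1 Hy)). lra.
Qed.

Lemma PI_le_13_4 : PI <= 13 / 4.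
Proof.
  destruct (PI_2_3_7_ineq 0) as [_ H]. simpl in H.
  unfold tg_alt, PI_2_3_7_tg, Ratan_seq in H. simpl in H. lra.
Qed.

Lemma sin_ge_half_id x : 0 <= x <= PI / 2 -> x / 2 <= sin x.
Proof.
  intros Hx. pose proof PI_le_13_4. pose proof PI2_3_2.
  destruct (Rle_dec x (3 / 2)).
  - pose proof (sin_ge_cubic x (proj1 Hx)). nra.
  - pose proof (sin_ge_cubic (3 / 2) ltac:(lra)).
    destruct (Req_dec x (PI / 2)) as [->|]; [rewrite sin_PI2; lra|].
    pose proof (sin_increasing_1 (3 / 2) x ltac:(lra) ltac:(lra) ltac:(lra) ltac:(lra) ltac:(lra)). nra.
Qed.

Lemma one_sub_cos_bounds t : - PI <= t <= PI ->
  t ^ 2 / 8 <= 1 - cos t /\ t ^ 2 / 2 - t ^ 4 / 24 <= 1 - cos t /\ 1 - cos t <= t ^ 2 / 2.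
Proof.
  intros Ht. set (x := Rabs t / 2).
  assert (Hc : 1 - cos t = 2 * sin x ^ 2).
  { assert (Habs : cos t = cos (Rabs t)).
    { destruct (Rle_dec 0 t); [rewrite Rabs_right | rewrite Rabs_left, cos_neg]; lra. }
    unfold x. rewrite Habs. replace (Rabs t) with (2 * (Rabs t / 2)) at 1 by field.
    rewrite cos_2a_sin. ring. }
  assert (Hx : 0 <= x <= PI / 2) by (unfold x; apply Rabs_le in Ht; pose proof (Rabs_pos t); split; lra).
  assert (Ht2 : t ^ 2 = 4 * x ^ 2) by (unfold x; rewrite <- (pow2_abs t); field).
  rewrite Hc. replace (t ^ 4) with ((t ^ 2) ^ 2) by ring. rewrite Ht2.
  pose proof (sin_ge_half_id x Hx). pose proof (sin_ge_cubic x (proj1 Hx)).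
  assert (sin x <= x).
  { destruct (Req_dec x 0) as [->|]; [rewrite sin_0; lra|]. pose proof (sin_lt_x x ltac:(lra)); lra. }
  pose proof PI_4. assert (0 <= x - x ^ 3 / 6) by nra.
  assert ((x - x ^ 3 / 6) ^ 2 <= sin x ^ 2) by (apply pow_incr; lra).
  repeat split; nra.
Qed.

Lemma sum_inv_sq_le N : sum_f_R0 (fun n => / (INR n + 1) ^ 2) N <= 2 - / (INR N + 1).
Proof.
  assert (Hstep : forall x, 1 <= x -> / (x + 1) ^ 2 + / (x + 1) <= / x).
  { intros x Hx. apply Rmult_le_reg_r with (x * (x + 1) ^ 2); [nra|].
    replace ((/ (x + 1) ^ 2 + / (x + 1)) * (x * (x + 1) ^ 2)) with (x + x * (x + 1)) by (field; lra).
    replace (/ x * (x * (x + 1) ^ 2)) with ((x + 1) ^ 2) by (field; lra). nra. }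
  induction N as [|N IH]; [simpl; lra|].
  change (sum_f_R0 (fun n => / (INR n + 1) ^ 2) (S N))
    with (sum_f_R0 (fun n => / (INR n + 1) ^ 2) N + / (INR (S N) + 1) ^ 2).
  rewrite S_INR. pose proof (pos_INR N).
  pose proof (Hstep (INR N + 1) ltac:(lra)). lra.
Qed.

Lemma ex_series_inv_sq : ex_series (fun n => / (INR n + 1) ^ 2).
Proof.
  apply (ex_series_bounded_sums _ 2).
  - intros n; pose proof (pos_INR n). apply Rlt_le, Rinv_0_lt_compat. nra.
  - intros N; pose proof (sum_inv_sq_le N). pose proof (pos_INR N).
    pose proof (Rinv_0_lt_compat (INR N + 1) ltac:(lra)). lra.
Qed.

Lemma Series_inv_sq_le : Series (fun n => / (INR n + 1) ^ 2) <= 2.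
Proof.
  apply (Series_le_of_sums_le _ _ ex_series_inv_sq). intros N.
  pose proof (sum_inv_sq_le N). pose proof (pos_INR N).
  pose proof (Rinv_0_lt_compat (INR N + 1) ltac:(lra)). lra.
Qed.

Lemma Rinv_le_mul_Rinv a b K : 0 < a -> 0 < b -> b <= K * a -> / a <= K * / b.
Proof.
  intros Ha Hb H. apply Rmult_le_reg_l with (a * b); [nra|].
  replace (a * b * / a) with b by (field; lra).
  replace (a * b * (K * / b)) with (K * a) by (field; lra). lra.
Qed.

(* The real part of [(y + i u)^-2]. *)
Definition re_inv_sq (y u : R) := (y ^ 2 - u ^ 2) / (y ^ 2 + u ^ 2) ^ 2.

Lemma re_inv_sq_opp y u : re_inv_sq y (- u) = re_inv_sq y u.
Proof. unfold re_inv_sq. f_equal; [|f_equal]; ring. Qed.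

Lemma re_inv_sq_swap y u : re_inv_sq u y = - re_inv_sq y u.
Proof. unfold re_inv_sq. replace (u ^ 2 + y ^ 2) with (y ^ 2 + u ^ 2) by ring. unfold Rdiv. ring. Qed.

Lemma re_inv_sq_scale l y u : l <> 0 -> re_inv_sq (l * y) (l * u) = re_inv_sq y u / l ^ 2.
Proof.
  intros Hl. unfold re_inv_sq.
  destruct (Req_dec (y ^ 2 + u ^ 2) 0) as [H0|H0].
  - assert (y = 0 /\ u = 0) as [-> ->] by nra. rewrite Rmult_0_r. unfold Rdiv. simpl. ring.
  - field. repeat split; auto. intros Hc. apply H0.
    apply (Rmult_eq_reg_l (l ^ 2)); [rewrite Rmult_0_r, <- Hc; ring | now apply pow_nonzero].
Qed.

Lemma Rabs_re_inv_sq_le y u : 0 < y ^ 2 + u ^ 2 -> Rabs (re_inv_sq y u) <= / (y ^ 2 + u ^ 2).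
Proof.
  intros H. unfold re_inv_sq. rewrite Rabs_div by (apply pow_nonzero; lra).
  rewrite (Rabs_right ((y ^ 2 + u ^ 2) ^ 2)) by (apply Rle_ge, pow_le; lra).
  replace (/ (y ^ 2 + u ^ 2)) with ((y ^ 2 + u ^ 2) / (y ^ 2 + u ^ 2) ^ 2) by (field; lra).
  apply Rmult_le_compat_r; [apply Rlt_le, Rinv_0_lt_compat, pow_lt; lra | apply Rabs_le; nra].
Qed.

Lemma ex_series_re_inv_sq_arith Y c d : 0 < Y -> d <> 0 ->
  ex_series (fun n => Rabs (re_inv_sq Y (c + d * INR n))).
Proof.
  intros HY Hd.
  set (m := (d - c) ^ 2 / Y ^ 2).
  assert (Hm : m * Y ^ 2 = (d - c) ^ 2) by (unfold m; field; lra).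
  assert (Hm0 : 0 <= m) by (unfold m; apply Rmult_le_pos; [apply pow2_ge_0 | apply Rlt_le, Rinv_0_lt_compat; nra]).
  assert (Hd2 : 0 < d ^ 2) by (rewrite <- Rsqr_pow2; now apply Rsqr_pos_lt).
  apply (ex_series_abs_le _ (fun n => 2 * (1 + m) / d ^ 2 * / (INR n + 1) ^ 2));
    [| exact (ex_series_scal_l _ _ ex_series_inv_sq)].
  intros n. set (u := c + d * INR n). pose proof (pos_INR n).
  eapply Rle_trans; [apply Rabs_re_inv_sq_le; nra | apply Rinv_le_mul_Rinv; [nra | nra |]].
  assert (Hw : d ^ 2 * (INR n + 1) ^ 2 <= 2 * (1 + m) * (Y ^ 2 + u ^ 2)).
  { replace (d ^ 2 * (INR n + 1) ^ 2) with ((u + (d - c)) ^ 2) by (unfold u; ring).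
    pose proof (pow2_ge_0 (u - (d - c))). nra. }
  apply Rmult_le_reg_l with (d ^ 2); [lra|].
  replace (d ^ 2 * (2 * (1 + m) / d ^ 2 * (Y ^ 2 + u ^ 2))) with (2 * (1 + m) * (Y ^ 2 + u ^ 2))
    by (field; lra).
  exact Hw.
Qed.

(* Real part of [1 / (4 sinh ((Y + i t) / 2) ^ 2)], the sum of [(Y + i (t + 2 k pi))^-2] over [k : Z]. *)
Definition lattice_form (Y t : R) := (cos t * cosh Y - 1) / (2 * (cosh Y - cos t) ^ 2).

Lemma lattice_form_duplication Y t : 0 < Y ->
  lattice_form Y t + lattice_form Y (t + PI) = 4 * lattice_form (2 * Y) (2 * t).
Proof.
  intros HY. pose proof (cosh_gt_1 Y HY). pose proof (COS_bound t).
  unfold lattice_form. rewrite neg_cos, cosh_double, cos_2a_cos.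
  field. repeat split; nra.
Qed.

Lemma numerator_bound a b A B K S0 :
  0 <= a -> 0 <= b -> 0 < a + b -> a + b <= S0 -> 0 <= K ->
  a <= A <= a + K * a ^ 2 -> b - b ^ 2 / 6 <= B <= b -> 0 <= B ->
  Rabs ((A - B - A * B) * (a + b) ^ 2 - (a - b) * (A + B) ^ 2) <=
    ((K + 1) + (1 + K * S0) + (2 * (K + 1) + (K + 1) ^ 2 * S0)) * (a + b) ^ 4.
Proof.
  intros Ha Hb Hs HS HK HA HB HB0.
  set (s := a + b). set (al := A - a). set (be := b - B). set (d := al - be).
  assert (Hs' : 0 < s) by (unfold s; lra). assert (HS' : s <= S0) by (unfold s; lra).
  assert (Hal : 0 <= al <= K * s ^ 2).
  { unfold al; split; [lra|]. assert (a ^ 2 <= s ^ 2) by (unfold s; nra). nra. }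
  assert (Hbe : 0 <= be <= s ^ 2).
  { unfold be; split; [lra|]. assert (b ^ 2 <= s ^ 2) by (unfold s; nra). nra. }
  assert (Hd : Rabs d <= (K + 1) * s ^ 2) by (apply Rabs_le; unfold d; nra).
  replace ((A - B - A * B) * s ^ 2 - (a - b) * (A + B) ^ 2)
    with ((al + be) * s ^ 2 - (A * B) * s ^ 2 - (a - b) * (2 * s * d + d ^ 2))
    by (unfold d, al, be, s; ring).
  assert (T1 : Rabs ((al + be) * s ^ 2) <= (K + 1) * s ^ 4).
  { rewrite Rabs_mult, (Rabs_right (s ^ 2)), Rabs_right by (apply Rle_ge; nra). nra. }
  assert (HA0 : 0 <= A <= s * (1 + K * S0)).
  { split; [lra|]. assert (a <= s) by (unfold s; lra). assert (a ^ 2 <= s * S0) by (unfold s in *; nra). nra. }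
  assert (T2 : Rabs ((A * B) * s ^ 2) <= (1 + K * S0) * s ^ 4).
  { rewrite Rabs_mult, (Rabs_right (s ^ 2)), Rabs_right by (apply Rle_ge; nra).
    assert (B <= s) by (unfold s; lra).
    assert (A * B <= s * (1 + K * S0) * s) by (apply Rmult_le_compat; lra). nra. }
  assert (T3 : Rabs ((a - b) * (2 * s * d + d ^ 2)) <= (2 * (K + 1) + (K + 1) ^ 2 * S0) * s ^ 4).
  { rewrite Rabs_mult. assert (Rabs (a - b) <= s) by (apply Rabs_le; unfold s; lra).
    assert (Rabs (2 * s * d + d ^ 2) <= (2 * (K + 1) + (K + 1) ^ 2 * S0) * s ^ 3).
    { eapply Rle_trans; [apply Rabs_triang|].
      rewrite !Rabs_mult, (Rabs_right 2), (Rabs_right s), <- RPow_abs by lra.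
      assert (Rabs d ^ 2 <= ((K + 1) * s ^ 2) ^ 2) by (apply pow_incr; split; [apply Rabs_pos | auto]).
      pose proof (Rabs_pos d).
      assert (2 * s * Rabs d <= 2 * s * ((K + 1) * s ^ 2)) by (apply Rmult_le_compat_l; lra).
      assert (((K + 1) * s ^ 2) ^ 2 <= (K + 1) ^ 2 * S0 * s ^ 3).
      { replace (((K + 1) * s ^ 2) ^ 2) with ((K + 1) ^ 2 * s * s ^ 3) by ring.
        apply Rmult_le_compat_r; [nra|]. apply Rmult_le_compat_l; [nra | lra]. }
      nra. }
    pose proof (Rabs_pos (2 * s * d + d ^ 2)).
    apply Rle_trans with (s * ((2 * (K + 1) + (K + 1) ^ 2 * S0) * s ^ 3)); [|right; ring].
    apply Rmult_le_compat; auto; apply Rabs_pos. }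
  unfold Rminus at 1. eapply Rle_trans; [apply Rabs_triang|]. rewrite Rabs_Ropp.
  eapply Rle_trans; [apply Rplus_le_compat; [apply Rabs_triang | apply Rle_refl]|].
  rewrite Rabs_Ropp. lra.
Qed.

Lemma quotient_difference_bound a b A B K S0 :
  0 <= a -> 0 <= b -> 0 < a + b -> a + b <= S0 -> 0 <= K ->
  a <= A <= a + K * a ^ 2 -> b - b ^ 2 / 6 <= B <= b -> b / 4 <= B ->
  Rabs ((a - b) / (2 * (a + b) ^ 2) - (A - B - A * B) / (2 * (A + B) ^ 2)) <=
    8 * ((K + 1) + (1 + K * S0) + (2 * (K + 1) + (K + 1) ^ 2 * S0)).
Proof.
  intros Ha Hb Hs HS HK HA HB HB4.
  assert (HN := numerator_bound a b A B K S0 Ha Hb Hs HS HK HA HB ltac:(lra)).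
  set (K2 := (K + 1) + (1 + K * S0) + (2 * (K + 1) + (K + 1) ^ 2 * S0)) in *.
  assert (HAB : (a + b) / 4 <= A + B) by lra.
  replace ((a - b) / (2 * (a + b) ^ 2) - (A - B - A * B) / (2 * (A + B) ^ 2)) with
    (- ((A - B - A * B) * (a + b) ^ 2 - (a - b) * (A + B) ^ 2) / (2 * (A + B) ^ 2 * (a + b) ^ 2))
    by (field; lra).
  assert (Hpos : 0 < 2 * ((a + b) / 4) ^ 2 * (a + b) ^ 2)
    by (apply Rmult_lt_0_compat; [apply Rmult_lt_0_compat; [lra | apply pow_lt; lra] | apply pow_lt; lra]).
  assert (HD : 2 * ((a + b) / 4) ^ 2 * (a + b) ^ 2 <= 2 * (A + B) ^ 2 * (a + b) ^ 2).
  { apply Rmult_le_compat_r; [apply pow2_ge_0|]. apply Rmult_le_compat_l; [lra|]. apply pow_incr; lra. }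
  unfold Rdiv. rewrite Rabs_mult, Rabs_Ropp, Rabs_inv, (Rabs_right (2 * _ * _)) by (apply Rle_ge || idtac; nra).
  apply Rle_trans with (K2 * (a + b) ^ 4 * / (2 * ((a + b) / 4) ^ 2 * (a + b) ^ 2)).
  - apply Rmult_le_compat; auto; [apply Rabs_pos | apply Rlt_le, Rinv_0_lt_compat; lra |].
    apply Rinv_le_contravar; auto.
  - right. field. lra.
Qed.

Lemma re_inv_sq_sub_lattice_form_bounded Y0 : 0 < Y0 -> exists C,
  forall Y t, 0 < Y <= Y0 -> - PI <= t <= PI -> Rabs (re_inv_sq Y t - lattice_form Y t) <= C.
Proof.
  intros HY0.
  set (K := cosh (Y0 / 2) ^ 2 / 2). set (S0 := Y0 ^ 2 / 2 + 6).
  eexists. intros Y t HY Ht.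
  pose proof PI_le_13_4. pose proof PI2_3_2.
  set (a := Y ^ 2 / 2). set (b := t ^ 2 / 2). set (A := cosh Y - 1). set (B := 1 - cos t).
  destruct (cosh_sub_1_bounds Y Y0 ltac:(lra)) as [HA1 HA2].
  destruct (one_sub_cos_bounds t Ht) as [HB1 [HB2 HB3]].
  assert (HS : a + b <= S0).
  { unfold a, b, S0. assert (Y ^ 2 <= Y0 ^ 2) by (apply pow_incr; lra). nra. }
  assert (HF : re_inv_sq Y t = (a - b) / (2 * (a + b) ^ 2)) by (unfold re_inv_sq, a, b; field; nra).
  assert (HQ : lattice_form Y t = (A - B - A * B) / (2 * (A + B) ^ 2)).
  { unfold lattice_form, A, B.
    replace (cos t * cosh Y - 1) with ((1 - (1 - cos t)) * (1 + (cosh Y - 1)) - 1) by ring.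
    replace (cosh Y - cos t) with ((cosh Y - 1) + (1 - cos t)) by ring.
    field. unfold A, B in *. nra. }
  assert (HB : b - b ^ 2 / 6 <= B) by (unfold a, b, B; replace ((t ^ 2 / 2) ^ 2 / 6) with (t ^ 4 / 24) by field; lra).
  rewrite HF, HQ. apply (quotient_difference_bound a b A B K S0); unfold a, b, A, B, K in *; nra.
Qed.

Definition sum_Z (g : R -> R) := Series (fun n => g (INR n)) + Series (fun n => g (- INR n - 1)).
Definition summable_Z (g : R -> R) :=
  ex_series (fun n => Rabs (g (INR n))) /\ ex_series (fun n => Rabs (g (- INR n - 1))).

Lemma sum_Z_ext g1 g2 : (forall x, g1 x = g2 x) -> sum_Z g1 = sum_Z g2.
Proof. intros H; unfold sum_Z; f_equal; apply Series_ext; auto. Qed.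

Lemma sum_Z_scal c g : sum_Z (fun x => c * g x) = c * sum_Z g.
Proof. unfold sum_Z. rewrite !Series_scal_l. ring. Qed.

Lemma sum_Z_shift g : summable_Z g -> sum_Z (fun x => g (x + 1)) = sum_Z g.
Proof.
  intros [H1 H2]. apply ex_series_Rabs in H1, H2. unfold sum_Z.
  rewrite (Series_ext (fun n => g (INR n + 1)) (fun n => g (INR (S n)))) by (intros; rewrite S_INR; auto).
  rewrite (Series_ext (fun n => g (- INR n - 1 + 1)) (fun n => g (- INR n))) by (intros; f_equal; ring).
  assert (E2 : ex_series (fun n => g (- INR n))).
  { apply ex_series_incr_1, (ex_series_ext (fun n => g (- INR n - 1))); auto.
    intros n; rewrite S_INR; f_equal; ring. }
  rewrite (Series_incr_1 (fun n => g (INR n)) H1), (Series_incr_1 (fun n => g (- INR n)) E2).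
  rewrite (Series_ext (fun k => g (- INR (S k))) (fun n => g (- INR n - 1)))
    by (intros; rewrite S_INR; f_equal; ring).
  simpl. rewrite Ropp_0. ring.
Qed.

Lemma INR_double n : INR (2 * n) = 2 * INR n.
Proof. rewrite mult_INR. simpl. ring. Qed.

Lemma INR_double_S n : INR (S (2 * n)) = 2 * INR n + 1.
Proof. rewrite S_INR, INR_double. ring. Qed.

Lemma sum_Z_even_odd g : summable_Z g ->
  sum_Z g = sum_Z (fun x => g (2 * x)) + sum_Z (fun x => g (2 * x + 1)).
Proof.
  intros [H1 H2]. unfold sum_Z. rewrite (Series_even_odd _ H1), (Series_even_odd _ H2).
  rewrite (Series_ext (fun n => g (INR (2 * n)))) with (b := fun n => g (2 * INR n))
    by (intros; rewrite INR_double; auto).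
  rewrite (Series_ext (fun n => g (INR (S (2 * n))))) with (b := fun n => g (2 * INR n + 1))
    by (intros; rewrite INR_double_S; auto).
  rewrite (Series_ext (fun n => g (- INR (2 * n) - 1))) with (b := fun n => g (2 * (- INR n - 1) + 1))
    by (intros; rewrite INR_double; f_equal; ring).
  rewrite (Series_ext (fun n => g (- INR (S (2 * n)) - 1))) with (b := fun n => g (2 * (- INR n - 1)))
    by (intros; rewrite INR_double_S; f_equal; ring).
  ring.
Qed.

Lemma summable_Z_re_inv_sq Y t c : 0 < Y -> c <> 0 -> summable_Z (fun x => re_inv_sq Y (t + c * x)).
Proof.
  intros HY Hc. split; [now apply ex_series_re_inv_sq_arith|].
  apply (ex_series_ext (fun n => Rabs (re_inv_sq Y ((t - c) + (- c) * INR n)))).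
  - intros n; do 2 f_equal; ring.
  - apply ex_series_re_inv_sq_arith; lra.
Qed.

Definition lattice_sum Y t := sum_Z (fun x => re_inv_sq Y (t + 2 * PI * x)).
Definition lattice_defect Y t := lattice_sum Y t - lattice_form Y t.

Lemma lattice_defect_periodic Y t : 0 < Y -> lattice_defect Y (t + 2 * PI) = lattice_defect Y t.
Proof.
  intros HY. pose proof PI_RGT_0. unfold lattice_defect, lattice_form, lattice_sum.
  rewrite <- (sum_Z_shift (fun x => re_inv_sq Y (t + 2 * PI * x))) by (apply summable_Z_re_inv_sq; lra).
  rewrite cos_plus, cos_2PI, sin_2PI.
  rewrite (sum_Z_ext (fun x => re_inv_sq Y (t + 2 * PI + 2 * PI * x))
                     (fun x => re_inv_sq Y (t + 2 * PI * (x + 1)))) by (intros; f_equal; ring).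
  f_equal. unfold Rdiv. f_equal; [|f_equal]; ring.
Qed.

Lemma lattice_defect_periodic_nat Y t n : 0 < Y ->
  lattice_defect Y (t + 2 * PI * INR n) = lattice_defect Y t.
Proof.
  intros HY; induction n as [|n IH]; [simpl; f_equal; ring|].
  rewrite S_INR. replace (t + 2 * PI * (INR n + 1)) with (t + 2 * PI * INR n + 2 * PI) by ring.
  now rewrite lattice_defect_periodic.
Qed.

Lemma lattice_defect_periodic_Z Y t (m : Z) : 0 < Y ->
  lattice_defect Y (t + 2 * PI * IZR m) = lattice_defect Y t.
Proof.
  intros HY. destruct (Z.le_gt_cases 0 m).
  - rewrite <- (Z2Nat.id m), <- INR_IZR_INZ by auto. now apply lattice_defect_periodic_nat.
  - replace m with (- Z.of_nat (Z.to_nat (- m)))%Z by lia. rewrite opp_IZR, <- INR_IZR_INZ.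
    rewrite <- (lattice_defect_periodic_nat Y (t + 2 * PI * - INR (Z.to_nat (- m))) (Z.to_nat (- m)) HY).
    f_equal; ring.
Qed.

Lemma lattice_defect_reduce Y t : 0 < Y ->
  exists t', - PI <= t' <= PI /\ lattice_defect Y t = lattice_defect Y t'.
Proof.
  intros HY. pose proof PI_RGT_0.
  destruct (archimed (t / (2 * PI) + 1 / 2)) as [H1 H2].
  set (k := (up (t / (2 * PI) + 1 / 2) - 1)%Z).
  exists (t + 2 * PI * IZR (- k)). split.
  - unfold k. rewrite opp_IZR, minus_IZR.
    assert (t / (2 * PI) * (2 * PI) = t) by (field; lra). split; nra.
  - now rewrite lattice_defect_periodic_Z.
Qed.

Lemma lattice_sum_duplication Y t : 0 < Y ->
  lattice_sum Y t + lattice_sum Y (t + PI) = 4 * lattice_sum (2 * Y) (2 * t).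
Proof.
  intros HY. pose proof PI_RGT_0. unfold lattice_sum.
  rewrite (sum_Z_ext (fun x => re_inv_sq (2 * Y) (2 * t + 2 * PI * x)) (fun x => / 4 * re_inv_sq Y (t + PI * x))).
  2:{ intros x. replace (2 * t + 2 * PI * x) with (2 * (t + PI * x)) by ring.
      rewrite re_inv_sq_scale by lra. field. }
  rewrite sum_Z_scal, (sum_Z_even_odd (fun x => re_inv_sq Y (t + PI * x))) by (apply summable_Z_re_inv_sq; lra).
  rewrite (sum_Z_ext (fun x => re_inv_sq Y (t + PI * (2 * x))) (fun x => re_inv_sq Y (t + 2 * PI * x)))
    by (intros; f_equal; ring).
  rewrite (sum_Z_ext (fun x => re_inv_sq Y (t + PI * (2 * x + 1))) (fun x => re_inv_sq Y (t + PI + 2 * PI * x)))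
    by (intros; f_equal; ring).
  field.
Qed.

Lemma lattice_defect_duplication Y t : 0 < Y ->
  lattice_defect Y t + lattice_defect Y (t + PI) = 4 * lattice_defect (2 * Y) (2 * t).
Proof.
  intros HY. unfold lattice_defect.
  rewrite Rmult_minus_distr_l, <- lattice_sum_duplication, <- lattice_form_duplication by auto. ring.
Qed.

Lemma Series_re_inv_sq_far Y (u : nat -> R) : 0 < Y -> (forall n, PI * (INR n + 1) <= Rabs (u n)) ->
  ex_series (fun n => re_inv_sq Y (u n)) /\ Rabs (Series (fun n => re_inv_sq Y (u n))) <= 2 / PI ^ 2.
Proof.
  intros HY Hu. pose proof PI_RGT_0.
  assert (Hb : forall n, Rabs (re_inv_sq Y (u n)) <= / PI ^ 2 * / (INR n + 1) ^ 2).
  { intros n. pose proof (pos_INR n). specialize (Hu n).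
    assert ((PI * (INR n + 1)) ^ 2 <= u n ^ 2) by (rewrite <- (pow2_abs (u n)); apply pow_incr; nra).
    eapply Rle_trans; [apply Rabs_re_inv_sq_le; nra|].
    rewrite <- Rinv_mult. apply Rinv_le_contravar; [apply Rmult_lt_0_compat; apply pow_lt; nra | nra]. }
  assert (Ee : ex_series (fun n => / PI ^ 2 * / (INR n + 1) ^ 2))
    by exact (ex_series_scal_l _ _ ex_series_inv_sq).
  assert (Ea := ex_series_abs_le _ _ Hb Ee).
  split; [now apply ex_series_Rabs|].
  eapply Rle_trans; [now apply Series_Rabs|].
  eapply Rle_trans; [apply Series_le; [intros n; split; [apply Rabs_pos | apply Hb] | exact Ee]|].
  rewrite Series_scal_l. pose proof Series_inv_sq_le.
  pose proof (Rinv_0_lt_compat (PI ^ 2) ltac:(apply pow_lt; lra)).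
  replace (2 / PI ^ 2) with (/ PI ^ 2 * 2) by (unfold Rdiv; ring). apply Rmult_le_compat_l; lra.
Qed.

Lemma lattice_sum_sub_center_le Y t : 0 < Y -> - PI <= t <= PI ->
  Rabs (lattice_sum Y t - re_inv_sq Y t) <= 1.
Proof.
  intros HY Ht. pose proof PI_RGT_0. pose proof PI2_3_2.
  destruct (Series_re_inv_sq_far Y (fun n => t + 2 * PI * INR (S n)) HY) as [E1 B1].
  { intros n. rewrite S_INR. pose proof (pos_INR n). rewrite Rabs_right; nra. }
  destruct (Series_re_inv_sq_far Y (fun n => t + 2 * PI * (- INR n - 1)) HY) as [E2 B2].
  { intros n. pose proof (pos_INR n). rewrite Rabs_left; nra. }
  unfold lattice_sum, sum_Z.
  rewrite (Series_incr_1 (fun n => re_inv_sq Y (t + 2 * PI * INR n))) by now apply ex_series_incr_1.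
  simpl INR at 1. replace (t + 2 * PI * 0) with t by ring.
  assert (2 / PI ^ 2 <= 1 / 2) by (apply Rmult_le_reg_r with (PI ^ 2); [nra | field_simplify; nra]).
  match goal with |- Rabs (?F + ?S1 + ?S2 - ?F) <= 1 => replace (F + S1 + S2 - F) with (S1 + S2) by ring end.
  eapply Rle_trans; [apply Rabs_triang | lra].
Qed.

Lemma lattice_defect_bounded Y0 : 0 < Y0 ->
  exists M, forall Y t, 0 < Y <= Y0 -> Rabs (lattice_defect Y t) <= M.
Proof.
  intros HY0. destruct (re_inv_sq_sub_lattice_form_bounded Y0 HY0) as [C HC].
  exists (C + 1). intros Y t HY. destruct (lattice_defect_reduce Y t ltac:(lra)) as [t' [Ht' ->]].
  pose proof (HC Y t' HY Ht'). pose proof (lattice_sum_sub_center_le Y t' ltac:(lra) Ht').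
  unfold lattice_defect.
  replace (lattice_sum Y t' - lattice_form Y t')
    with ((lattice_sum Y t' - re_inv_sq Y t') + (re_inv_sq Y t' - lattice_form Y t')) by ring.
  eapply Rle_trans; [apply Rabs_triang | lra].
Qed.

(* Iterating the duplication equation gives [|E| <= M / 2 ^ n]. *)
Lemma duplication_bounded_eq_0 (E : R -> R -> R) c Y0 M :
  (forall Y t, 0 < Y -> E Y t + E Y (t + c) = 4 * E (2 * Y) (2 * t)) ->
  (forall Y t, 0 < Y <= Y0 -> Rabs (E Y t) <= M) ->
  forall Y t, 0 < Y <= Y0 -> E Y t = 0.
Proof.
  intros Hdup Hbd.
  assert (Hn : forall n Y t, 0 < Y <= Y0 -> Rabs (E Y t) <= M * (/ 2) ^ n).
  { induction n as [|n IH]; intros Y t HY; [rewrite pow_O, Rmult_1_r; auto|].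
    assert (Hd := Hdup (Y / 2) (t / 2) ltac:(lra)).
    replace (2 * (Y / 2)) with Y in Hd by field. replace (2 * (t / 2)) with t in Hd by field.
    pose proof (IH (Y / 2) (t / 2) ltac:(lra)). pose proof (IH (Y / 2) (t / 2 + c) ltac:(lra)).
    replace (E Y t) with ((E (Y / 2) (t / 2) + E (Y / 2) (t / 2 + c)) / 4) by lra.
    unfold Rdiv. rewrite Rabs_mult, (Rabs_right (/ 4)) by lra.
    pose proof (Rabs_triang (E (Y / 2) (t / 2)) (E (Y / 2) (t / 2 + c))).
    simpl pow. lra. }
  intros Y t HY.
  assert (Hlim : is_lim_seq (fun n => M * (/ 2) ^ n) 0).
  { replace (Finite 0) with (Rbar_mult M 0) by (simpl; now rewrite Rmult_0_r).
    apply is_lim_seq_scal_l, is_lim_seq_geom. rewrite Rabs_right; lra. }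
  assert (Hle := is_lim_seq_le _ _ _ _ (fun n => Hn n Y t HY) (is_lim_seq_const _) Hlim).
  simpl in Hle. destruct (Req_dec (E Y t) 0) as [|Hne]; auto.
  pose proof (Rabs_pos_lt _ Hne). lra.
Qed.

Lemma lattice_sum_eq Y t : 0 < Y -> lattice_sum Y t = lattice_form Y t.
Proof.
  intros HY. destruct (lattice_defect_bounded Y HY) as [M HM].
  enough (lattice_defect Y t = 0) by (unfold lattice_defect in *; lra).
  apply (duplication_bounded_eq_0 lattice_defect PI Y M); auto; [apply lattice_defect_duplication | lra].
Qed.

Lemma Series_re_inv_sq_even_PI Y : 0 < Y ->
  Series (fun n => re_inv_sq Y (2 * PI * (INR n + 1))) = (/ (2 * (cosh Y - 1)) - / Y ^ 2) / 2.
Proof.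
  intros HY. pose proof PI_RGT_0 as Hpi. pose proof (cosh_gt_1 Y HY) as Hc.
  assert (H := lattice_sum_eq Y 0 HY). unfold lattice_sum, sum_Z, lattice_form in H.
  assert (E0 : ex_series (fun n => re_inv_sq Y (0 + 2 * PI * INR n))).
  { apply ex_series_Rabs, (ex_series_ext (fun n => Rabs (re_inv_sq Y (0 + 2 * PI * INR n)))); auto.
    apply ex_series_re_inv_sq_arith; lra. }
  rewrite (Series_incr_1 _ E0) in H.
  rewrite (Series_ext (fun k => re_inv_sq Y (0 + 2 * PI * INR (S k))) (fun n => re_inv_sq Y (2 * PI * (INR n + 1)))) in H
    by (intros; rewrite S_INR; f_equal; ring).
  rewrite (Series_ext (fun n => re_inv_sq Y (0 + 2 * PI * (- INR n - 1))) (fun n => re_inv_sq Y (2 * PI * (INR n + 1)))) in H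
    by (intros; rewrite <- re_inv_sq_opp; f_equal; ring).
  simpl INR in H. replace (0 + 2 * PI * 0) with 0 in H by ring.
  assert (re_inv_sq Y 0 = / Y ^ 2) by (unfold re_inv_sq; field; lra).
  rewrite cos_0 in H. replace ((1 * cosh Y - 1) / (2 * (cosh Y - 1) ^ 2)) with (/ (2 * (cosh Y - 1))) in H
    by (field; lra).
  lra.
Qed.

Lemma Series_re_inv_sq_odd_PI Y : 0 < Y ->
  Series (fun n => re_inv_sq Y (PI * (2 * INR n + 1))) = - / (4 * (cosh Y + 1)).
Proof.
  intros HY. pose proof (cosh_gt_1 Y HY) as Hc.
  assert (H := lattice_sum_eq Y PI HY). unfold lattice_sum, sum_Z, lattice_form in H.
  rewrite (Series_ext (fun n => re_inv_sq Y (PI + 2 * PI * INR n)) (fun n => re_inv_sq Y (PI * (2 * INR n + 1)))) in H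
    by (intros; f_equal; ring).
  rewrite (Series_ext (fun n => re_inv_sq Y (PI + 2 * PI * (- INR n - 1))) (fun n => re_inv_sq Y (PI * (2 * INR n + 1)))) in H
    by (intros; rewrite <- re_inv_sq_opp; f_equal; ring).
  rewrite cos_PI in H. replace ((-1 * cosh Y - 1) / (2 * (cosh Y - -1) ^ 2)) with (- / (2 * (cosh Y + 1))) in H
    by (field; lra).
  replace (- / (4 * (cosh Y + 1))) with (- / (2 * (cosh Y + 1)) / 2) by (field; lra). lra.
Qed.

Definition half_odd_pi (n : nat) := PI * (INR n + / 2).

Lemma half_odd_pi_pos n : 0 < half_odd_pi n.
Proof. pose proof PI_RGT_0. pose proof (pos_INR n). unfold half_odd_pi. nra. Qed.

Lemma Series_re_inv_sq_half_odd_pi x : 0 < x ->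
  ex_series (fun n => re_inv_sq (half_odd_pi n) x) /\
  Series (fun n => re_inv_sq (half_odd_pi n) x) = / (cosh (2 * x) + 1).
Proof.
  intros Hx. pose proof PI_RGT_0. pose proof (cosh_gt_1 (2 * x) ltac:(lra)).
  assert (Heq : forall n, re_inv_sq (half_odd_pi n) x = - 4 * re_inv_sq (2 * x) (PI * (2 * INR n + 1))).
  { intros n. rewrite re_inv_sq_swap. unfold half_odd_pi.
    replace (PI * (2 * INR n + 1)) with (2 * (PI * (INR n + / 2))) by field.
    rewrite re_inv_sq_scale by lra. field. }
  split.
  - assert (E : ex_series (fun n => re_inv_sq (2 * x) (PI * (2 * INR n + 1)))).
    { apply ex_series_Rabs, (ex_series_ext (fun n => Rabs (re_inv_sq (2 * x) (PI + 2 * PI * INR n)))).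
      + intros n; do 2 f_equal; ring.
      + apply ex_series_re_inv_sq_arith; lra. }
    exact (ex_series_ext _ _ (fun n => eq_sym (Heq n)) (ex_series_scal_l (-4) _ E)).
  - rewrite (Series_ext _ _ Heq), Series_scal_l, Series_re_inv_sq_odd_PI by lra. field. lra.
Qed.

(* Equal to [cosh Y / sinh Y ^ 2]. *)
Definition coth_csch (Y : R) := / (2 * (cosh Y - 1)) + / (2 * (cosh Y + 1)).

Lemma Series_alternating_re_inv_sq y a : 0 < y -> 0 < a ->
  ex_series (fun m => Rabs (re_inv_sq y ((INR m + 1) * a))) /\
  Series (fun m => (-1) ^ S m * re_inv_sq y ((INR m + 1) * a)) =
    ((PI / a) ^ 2 * coth_csch (PI * y / a) - / y ^ 2) / 2.
Proof.
  intros Hy Ha. pose proof PI_RGT_0 as Hpi.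
  set (l := PI / a). assert (Hl : 0 < l) by (unfold l; apply Rdiv_lt_0_compat; lra).
  set (Y := PI * y / a). assert (HY : 0 < Y) by (unfold Y; apply Rdiv_lt_0_compat; nra).
  assert (Hsc : forall m, re_inv_sq y ((INR m + 1) * a) = l ^ 2 * re_inv_sq Y (PI * (INR m + 1))).
  { intros m. replace Y with (l * y) by (unfold Y, l; field; lra).
    replace (PI * (INR m + 1)) with (l * ((INR m + 1) * a)) by (unfold l; field; lra).
    rewrite re_inv_sq_scale by lra. field. lra. }
  assert (Eh : ex_series (fun m => Rabs (re_inv_sq Y (PI * (INR m + 1))))).
  { apply (ex_series_ext (fun n => Rabs (re_inv_sq Y (PI + PI * INR n)))); [intros; do 2 f_equal; ring|].
    apply ex_series_re_inv_sq_arith; lra. }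
  split.
  { apply (ex_series_ext (fun m => l ^ 2 * Rabs (re_inv_sq Y (PI * (INR m + 1))))).
    - intros m. rewrite Hsc, Rabs_mult, (Rabs_right (l ^ 2)) by (apply Rle_ge, pow2_ge_0). reflexivity.
    - apply (ex_series_scal_l _ _ Eh). }
  set (h := fun m => (-1) ^ S m * re_inv_sq Y (PI * (INR m + 1))).
  assert (Eha : ex_series (fun m => Rabs (h m))).
  { apply (ex_series_ext (fun m => Rabs (re_inv_sq Y (PI * (INR m + 1))))); [|exact Eh].
    intros m; unfold h; now rewrite Rabs_mult, pow_1_abs, Rmult_1_l. }
  rewrite (Series_ext _ (fun m => l ^ 2 * h m)) by (intros m; unfold h; rewrite Hsc; ring).
  rewrite Series_scal_l, (Series_even_odd h Eha).
  rewrite (Series_ext (fun n => h (2 * n)%nat) (fun n => - re_inv_sq Y (PI * (2 * INR n + 1))))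
    by (intros n; unfold h; rewrite INR_double, pow_1_odd; ring).
  rewrite (Series_ext (fun n => h (S (2 * n))) (fun n => re_inv_sq Y (2 * PI * (INR n + 1)))).
  2:{ intros n; unfold h. rewrite INR_double_S.
      replace (S (S (2 * n))) with (2 * (n + 1))%nat by lia. rewrite pow_1_even, Rmult_1_l. f_equal; ring. }
  rewrite Series_opp, Series_re_inv_sq_even_PI, Series_re_inv_sq_odd_PI by auto.
  unfold coth_csch. replace (/ y ^ 2) with (l ^ 2 * / Y ^ 2) by (unfold l, Y; field; split; lra).
  pose proof (cosh_gt_1 Y HY). field. lra.
Qed.

Lemma is_lim_seq_half_pow (g : R -> R) : ex_derive g 0 -> is_lim_seq (fun M => g ((/ 2) ^ M)) (g 0).
Proof.
  intros Hg. apply is_lim_seq_continuous.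
  - apply continuity_pt_filterlim, (@ex_derive_continuous R_AbsRing R_NormedModule), Hg.
  - apply is_lim_seq_geom. rewrite Rabs_right; lra.
Qed.

(* Letting [Y -> 0] in [Series_re_inv_sq_odd_PI]. *)
Lemma Series_inv_sq_odd :
  ex_series (fun n => / (2 * INR n + 1) ^ 2) /\ Series (fun n => / (2 * INR n + 1) ^ 2) = PI ^ 2 / 8.
Proof.
  pose proof PI_RGT_0 as Hpi.
  set (u := fun n => PI * (2 * INR n + 1)).
  assert (Hu : forall n, 0 < u n) by (intros n; unfold u; pose proof (pos_INR n); nra).
  set (h := fun n => / (u n) ^ 2).
  assert (Eh : ex_series h).
  { apply (ex_series_Rabs_le _ (fun n => / PI ^ 2 * / (INR n + 1) ^ 2));
      [| exact (ex_series_scal_l _ _ ex_series_inv_sq)].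
    intros n. pose proof (pos_INR n). pose proof (Hu n).
    unfold h, u. rewrite Rabs_right by (apply Rle_ge, Rlt_le, Rinv_0_lt_compat, pow_lt; nra).
    rewrite <- Rinv_mult. apply Rinv_le_contravar; [apply Rmult_lt_0_compat; apply pow_lt; nra|].
    replace (PI ^ 2 * (INR n + 1) ^ 2) with ((PI * (INR n + 1)) ^ 2) by ring. apply pow_incr. nra. }
  set (b := fun M n => re_inv_sq ((/ 2) ^ M) (u n)).
  assert (Hlim : forall n, is_lim_seq (fun M => b M n) (- h n)).
  { intros n. replace (- h n) with (re_inv_sq 0 (u n)) by (unfold re_inv_sq, h; specialize (Hu n); field; lra).
    apply (is_lim_seq_half_pow (fun Y => re_inv_sq Y (u n))).
    unfold re_inv_sq. auto_derive. specialize (Hu n). apply Rgt_not_eq. apply Rmult_gt_0_compat; nra. }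
  assert (Hbd : forall M n, Rabs (b M n) <= h n).
  { intros M n. pose proof (pow_lt (/ 2) M ltac:(lra)). pose proof (Hu n). unfold b, h.
    eapply Rle_trans; [apply Rabs_re_inv_sq_le; nra|].
    apply Rinv_le_contravar; [apply pow_lt|]; nra. }
  assert (HT := tannery b (fun n => - h n) h Hlim Hbd Eh).
  assert (HS : forall M, Series (b M) = - / (4 * (cosh ((/ 2) ^ M) + 1)))
    by (intros M; apply Series_re_inv_sq_odd_PI, pow_lt; lra).
  apply (is_lim_seq_ext _ _ _ HS) in HT.
  assert (HL := is_lim_seq_half_pow (fun Y => - / (4 * (cosh Y + 1)))).
  cbv beta in HL. rewrite cosh_0 in HL.
  assert (Hh : Series h = / 8).
  { rewrite <- (Ropp_involutive (Series h)), <- Series_opp.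
    replace (/ 8) with (- - / (4 * (1 + 1))) by field.
    f_equal. apply Rbar_finite_eq. rewrite <- (is_lim_seq_unique _ _ HT).
    apply is_lim_seq_unique, HL. unfold cosh. auto_derive. pose proof (exp_pos 0). pose proof (exp_pos (- 0)). lra. }
  assert (Hinv : forall n, / (2 * INR n + 1) ^ 2 = PI ^ 2 * h n).
  { intros n. pose proof (pos_INR n). unfold h, u. field. nra. }
  split.
  - apply (ex_series_ext _ _ (fun n => eq_sym (Hinv n)) (ex_series_scal_l _ _ Eh)).
  - rewrite (Series_ext _ _ Hinv), Series_scal_l, Hh. field.
Qed.

Lemma is_series_succ_mul_pow x : Rabs x < 1 -> is_series (fun n => INR (S n) * x ^ n) (/ (1 - x) ^ 2).
Proof.
  intros Hx.
  assert (Ea : ex_series (fun n => Rabs (x ^ n))).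
  { apply (ex_series_ext (fun n => Rabs x ^ n)); [intros; now rewrite RPow_abs|].
    apply ex_series_geom. now rewrite Rabs_Rabsolu. }
  assert (Hm := is_series_mult _ _ _ _ (is_series_geom x Hx) (is_series_geom x Hx) Ea Ea).
  replace (/ (1 - x) ^ 2) with (/ (1 - x) * / (1 - x)) by (field; apply Rabs_lt_between in Hx; lra).
  refine (is_series_ext _ _ _ _ Hm). intros n.
  rewrite (sum_eq _ (fun _ => x ^ n)) by (intros k Hk; rewrite <- pow_add; f_equal; lia).
  rewrite sum_cte. apply Rmult_comm.
Qed.

Lemma is_series_sum_f_R0 (a : nat -> R) (l : R) : is_series a l -> is_lim_seq (fun M => sum_f_R0 a M) l.
Proof. intros H. apply (is_lim_seq_ext (sum_n a)); [intros; apply sum_n_Reals | exact H]. Qed.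

Lemma is_series_alt_succ_mul_pow s : 0 <= s < 1 ->
  is_series (fun n => (-1) ^ S n * INR (S n) * s ^ S n) (- (s / (1 + s) ^ 2)).
Proof.
  intros Hs. assert (H := is_series_succ_mul_pow (- s) ltac:(rewrite Rabs_Ropp, Rabs_right; lra)).
  apply (is_series_scal_l (- s)) in H.
  replace (- (s / (1 + s) ^ 2)) with (scal (- s) (/ (1 - - s) ^ 2)) by (unfold scal; simpl; unfold mult; simpl; field; lra).
  refine (is_series_ext _ _ _ _ H). intros n. unfold scal; simpl; unfold mult; simpl.
  replace ((- s) ^ n) with ((-1) ^ n * s ^ n) by (rewrite <- Rpow_mult_distr; f_equal; ring). ring.
Qed.

Lemma is_series_alt_geom r : 0 <= r < 1 -> is_series (fun j => (-1) ^ j * r ^ S j) (r / (1 + r)).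
Proof.
  intros Hr. assert (H := is_series_geom (- r) ltac:(rewrite Rabs_Ropp, Rabs_right; lra)).
  apply (is_series_scal_l r) in H.
  replace (r / (1 + r)) with (scal r (/ (1 - - r))) by (unfold scal; simpl; unfold mult; simpl; field; lra).
  refine (is_series_ext _ _ _ _ H). intros n. unfold scal; simpl; unfold mult; simpl.
  replace ((- r) ^ n) with ((-1) ^ n * r ^ n) by (rewrite <- Rpow_mult_distr; f_equal; ring). ring.
Qed.

Definition lambert_coef q m := q ^ m / (1 + q ^ m) ^ 2.

(* Expand [q^k / (1 + q^k)] geometrically and exchange the two summations. *)
Lemma lambert_transform q : 0 <= q < 1 ->
  is_lim_seq (fun M => sum_f_R0 (fun j => (-1) ^ S j * lambert_coef q (S j)) M) (Series (Gamma_term q)).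
Proof.
  intros Hq.
  set (c := fun n => (-1) ^ S n * INR (S n)).
  set (b := fun M n => c n * sum_f_R0 (fun j => (-1) ^ j * (q ^ S n) ^ S j) M).
  set (h := fun n => q * (INR (S n) * q ^ n)).
  assert (Hr : forall n, 0 <= q ^ S n < 1).
  { intros n; split; [apply pow_le; lra | apply pow_lt_1_compat; [lra | lia]]. }
  assert (Hl : forall n, is_lim_seq (fun M => b M n) (Gamma_term q n)).
  { intros n. unfold b. replace (Gamma_term q n) with (c n * (q ^ S n / (1 + q ^ S n))).
    2:{ unfold Gamma_term, c. specialize (Hr n). field. lra. }
    apply (is_lim_seq_scal_l _ (c n) (q ^ S n / (1 + q ^ S n))).
    apply is_series_sum_f_R0, is_series_alt_geom; auto. }
  assert (Hb : forall M n, Rabs (b M n) <= h n).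
  { intros M n. unfold b, h, c. rewrite !Rabs_mult, pow_1_abs, Rabs_right by (apply Rle_ge, pos_INR).
    specialize (Hr n).
    assert (Ha := Rabs_alternating_sum_le (fun j => (q ^ S n) ^ S j) M).
    cbv beta in Ha. rewrite pow_1 in Ha.
    replace (q * (INR (S n) * q ^ n)) with (1 * INR (S n) * q ^ S n) by (simpl; ring).
    apply Rmult_le_compat_l; [rewrite Rmult_1_l; apply pos_INR|].
    apply Ha; [|lra]. intros m. split; [apply pow_le; lra|].
    change ((q ^ S n) ^ S (S m)) with (q ^ S n * (q ^ S n) ^ S m).
    rewrite <- (Rmult_1_l ((q ^ S n) ^ S m)) at 2. apply Rmult_le_compat_r; [apply pow_le|]; lra. }
  assert (Eh : ex_series h).
  { exists (q * / (1 - q) ^ 2). apply (is_series_scal_l q (fun n => INR (S n) * q ^ n)).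
    apply is_series_succ_mul_pow. rewrite Rabs_right; lra. }
  refine (is_lim_seq_ext _ _ _ _ (tannery b (Gamma_term q) h Hl Hb Eh)). intros M. unfold b.
  rewrite (Series_ext _ (fun n => sum_f_R0 (fun j => (-1) ^ j * ((-1) ^ S n * INR (S n) * (q ^ S j) ^ S n)) M)).
  2:{ intros n. transitivity (sum_f_R0 (fun j => ((-1) ^ j * (q ^ S n) ^ S j) * c n) M).
      - rewrite <- scal_sum. ring.
      - apply sum_eq. intros j _. unfold c. rewrite <- !pow_mult, Nat.mul_comm. ring. }
  rewrite Series_sum_f_R0.
  - apply sum_eq. intros j _.
    rewrite Series_scal_l, (is_series_unique _ _ (is_series_alt_succ_mul_pow (q ^ S j) (Hr j))).
    unfold lambert_coef. change ((-1) ^ S j) with (-1 * (-1) ^ j). unfold Rdiv. ring.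
  - intros j. exists ((-1) ^ j * - (q ^ S j / (1 + q ^ S j) ^ 2)).
    apply (is_series_scal_l ((-1) ^ j) (fun k => (-1) ^ S k * INR (S k) * (q ^ S j) ^ S k)).
    now apply is_series_alt_succ_mul_pow.
Qed.

Lemma exp_pow_INR x n : exp x ^ n = exp (INR n * x).
Proof.
  induction n as [|n IH]; [simpl; now rewrite Rmult_0_l, exp_0|].
  simpl pow. rewrite IH, S_INR, <- exp_plus. f_equal. ring.
Qed.

Lemma lambert_coef_exp a j :
  lambert_coef (exp (-2 * a)) (S j) = / 2 * / (cosh (2 * ((INR j + 1) * a)) + 1).
Proof.
  unfold lambert_coef. rewrite exp_pow_INR, S_INR.
  set (x := (INR j + 1) * a).
  replace ((INR j + 1) * (-2 * a)) with (- (2 * x)) by (unfold x; ring).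
  unfold cosh. replace (exp (2 * x)) with (/ exp (- (2 * x))) by (now rewrite exp_Ropp, Rinv_inv).
  pose proof (exp_pos (- (2 * x))). field. split; nra.
Qed.

Lemma Rabs_alternating_re_inv_sq_sum_le y a M : 0 < y -> 0 < a ->
  Rabs (sum_f_R0 (fun j => (-1) ^ S j * re_inv_sq y ((INR j + 1) * a)) M) <= 3 / y ^ 2.
Proof.
  intros Hy Ha.
  set (w := fun j => y ^ 2 + ((INR j + 1) * a) ^ 2).
  assert (Hw : forall j, y ^ 2 <= w j <= w (S j)).
  { intros j. unfold w. rewrite S_INR. pose proof (pos_INR j). split; nra. }
  assert (Hy2 : 0 < y ^ 2) by nra.
  assert (Halt : forall k e, 0 <= k ->
            Rabs (sum_f_R0 (fun j => (-1) ^ j * (k / w j ^ e)) M) <= k / (y ^ 2) ^ e).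
  { intros k e Hk.
    assert (Hwe : forall j, 0 < (y ^ 2) ^ e <= w j ^ e)
      by (intros j; specialize (Hw j); split; [apply pow_lt | apply pow_incr]; lra).
    assert (Hmono : forall j, 0 <= k / w (S j) ^ e <= k / w j ^ e).
    { intros j. pose proof (Hwe j). pose proof (Hwe (S j)).
      assert (w j ^ e <= w (S j) ^ e) by (apply pow_incr; specialize (Hw j); lra).
      split; [apply Rmult_le_pos, Rlt_le, Rinv_0_lt_compat; lra|].
      apply Rmult_le_compat_l, Rinv_le_contravar; lra. }
    assert (H0 : 0 <= k / w 0%nat ^ e)
      by (pose proof (Hwe 0%nat); apply Rmult_le_pos, Rlt_le, Rinv_0_lt_compat; lra).
    eapply Rle_trans; [exact (Rabs_alternating_sum_le _ M Hmono H0)|].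
    specialize (Hwe 0%nat). apply Rmult_le_compat_l, Rinv_le_contravar; lra. }
  replace (sum_f_R0 (fun j => (-1) ^ S j * re_inv_sq y ((INR j + 1) * a)) M)
    with (sum_f_R0 (fun j => (-1) ^ j * (1 / w j ^ 1)) M - sum_f_R0 (fun j => (-1) ^ j * (2 * y ^ 2 / w j ^ 2)) M).
  2:{ rewrite <- minus_sum. apply sum_eq. intros j _. unfold re_inv_sq, w.
      pose proof (pos_INR j). change ((-1) ^ S j) with (-1 * (-1) ^ j). field. nra. }
  pose proof (Halt 1 1%nat ltac:(lra)). pose proof (Halt (2 * y ^ 2) 2%nat ltac:(lra)).
  unfold Rminus. eapply Rle_trans; [apply Rabs_triang|]. rewrite Rabs_Ropp.
  replace (3 / y ^ 2) with (1 / (y ^ 2) ^ 1 + 2 * y ^ 2 / (y ^ 2) ^ 2) by (field; lra). lra.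
Qed.

Lemma Series_inv_sq_half_odd_pi :
  ex_series (fun n => / half_odd_pi n ^ 2) /\ Series (fun n => / half_odd_pi n ^ 2) = 1 / 2.
Proof.
  pose proof PI_RGT_0. destruct Series_inv_sq_odd as [E S].
  assert (Heq : forall n, / half_odd_pi n ^ 2 = 4 / PI ^ 2 * / (2 * INR n + 1) ^ 2).
  { intros n. pose proof (pos_INR n). unfold half_odd_pi. field. nra. }
  split.
  - exact (ex_series_ext _ _ (fun n => eq_sym (Heq n)) (ex_series_scal_l _ _ E)).
  - rewrite (Series_ext _ _ Heq), Series_scal_l, S. field. lra.
Qed.

(* The partial fractions of [sech ^ 2] turn the Lambert coefficients into the inner sums. *)
Lemma Series_alternating_re_inv_sq_half_odd_pi a : 0 < a ->
  ex_series (fun n => Series (fun j => (-1) ^ S j * re_inv_sq (half_odd_pi n) ((INR j + 1) * a))) /\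
  Series (fun n => Series (fun j => (-1) ^ S j * re_inv_sq (half_odd_pi n) ((INR j + 1) * a)))
  = 2 * Series (Gamma_term (exp (-2 * a))).
Proof.
  intros Ha.
  set (b := fun M n => sum_f_R0 (fun j => (-1) ^ S j * re_inv_sq (half_odd_pi n) ((INR j + 1) * a)) M).
  set (f := fun n => Series (fun j => (-1) ^ S j * re_inv_sq (half_odd_pi n) ((INR j + 1) * a))).
  set (h := fun n => 3 / half_odd_pi n ^ 2).
  assert (Eh : ex_series h) by exact (ex_series_scal_l 3 _ (proj1 Series_inv_sq_half_odd_pi)).
  assert (Hl : forall n, is_lim_seq (fun M => b M n) (f n)).
  { intros n. apply is_series_sum_f_R0, Series_correct, ex_series_Rabs.
    destruct (Series_alternating_re_inv_sq (half_odd_pi n) a (half_odd_pi_pos n) Ha) as [E _].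
    apply (ex_series_ext (fun j => Rabs (re_inv_sq (half_odd_pi n) ((INR j + 1) * a)))); auto.
    intros j; now rewrite Rabs_mult, pow_1_abs, Rmult_1_l. }
  assert (Hb : forall M n, Rabs (b M n) <= h n)
    by (intros; apply Rabs_alternating_re_inv_sq_sum_le; [apply half_odd_pi_pos | auto]).
  split.
  { apply (ex_series_Rabs_le _ h); [intros n | exact Eh]. exact (Rabs_le_of_is_lim_seq _ _ _ (Hl n) (fun M => Hb M n)). }
  assert (HS : forall M, Series (b M) =
            2 * sum_f_R0 (fun j => (-1) ^ S j * lambert_coef (exp (-2 * a)) (S j)) M).
  { intros M. unfold b.
    assert (Hx : forall j, 0 < (INR j + 1) * a) by (intros j; pose proof (pos_INR j); nra).
    rewrite (Series_sum_f_R0 (fun j n => (-1) ^ S j * re_inv_sq (half_odd_pi n) ((INR j + 1) * a))).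
    - rewrite scal_sum. apply sum_eq. intros j _.
      rewrite Series_scal_l, (proj2 (Series_re_inv_sq_half_odd_pi _ (Hx j))), lambert_coef_exp.
      pose proof (cosh_ge_1 (2 * ((INR j + 1) * a))). field. lra.
    - intros j. exact (ex_series_scal_l _ _ (proj1 (Series_re_inv_sq_half_odd_pi _ (Hx j)))). }
  assert (Hq : 0 <= exp (-2 * a) < 1).
  { split; [apply Rlt_le, exp_pos | rewrite <- exp_0; apply exp_increasing; lra]. }
  assert (HL := is_lim_seq_scal_l _ 2 _ (lambert_transform _ Hq)).
  apply Rbar_finite_eq. rewrite <- (is_lim_seq_unique _ _ (tannery b f h Hl Hb Eh)).
  rewrite (Lim_seq_ext _ _ HS). exact (is_lim_seq_unique _ _ HL).
Qed.

Lemma Gamma_exp_eq a : 0 < a ->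
  Gamma (exp (-2 * a)) = 2 * (PI / a) ^ 2 * Series (fun n => coth_csch (PI * half_odd_pi n / a)).
Proof.
  intros Ha. pose proof PI_RGT_0.
  destruct (Series_alternating_re_inv_sq_half_odd_pi a Ha) as [Ef Sf].
  destruct Series_inv_sq_half_odd_pi as [Eb Sb].
  set (f := fun n => Series (fun j => (-1) ^ S j * re_inv_sq (half_odd_pi n) ((INR j + 1) * a))) in *.
  assert (Hf : forall n, coth_csch (PI * half_odd_pi n / a) = (a / PI) ^ 2 * (2 * f n + / half_odd_pi n ^ 2)).
  { intros n. unfold f.
    rewrite (proj2 (Series_alternating_re_inv_sq (half_odd_pi n) a (half_odd_pi_pos n) Ha)).
    pose proof (half_odd_pi_pos n). field. lra. }
  rewrite (Series_ext _ _ Hf), Series_scal_l, Series_plus, Series_scal_l, Sf, Sb;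
    [| exact (ex_series_scal_l 2 f Ef) | exact Eb].
  unfold Gamma. field. lra.
Qed.

Definition artanh (s : R) := (ln (1 + s) - ln (1 - s)) / 2.

Lemma artanh_bounds s : 0 <= s < 1 -> s <= artanh s <= s / (1 - s ^ 2).
Proof.
  intros Hs. unfold artanh. split.
  - enough (ln (1 + 0) - ln (1 - 0) - 2 * 0 <= ln (1 + s) - ln (1 - s) - 2 * s)
      by (rewrite Rplus_0_r, Rminus_0_r, ln_1 in *; lra).
    apply (le_of_derive_nonneg (fun x => ln (1 + x) - ln (1 - x) - 2 * x) (fun x => 2 * x ^ 2 / (1 - x ^ 2)));
      [lra | |].
    + intros x Hx. auto_derive; [repeat split; lra|]. field. split; nra.
    + intros x Hx. apply Rmult_le_pos; [nra | apply Rlt_le, Rinv_0_lt_compat; nra].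
  - enough (2 * 0 / (1 - 0 ^ 2) - (ln (1 + 0) - ln (1 - 0)) <= 2 * s / (1 - s ^ 2) - (ln (1 + s) - ln (1 - s))).
    { rewrite Rplus_0_r, Rminus_0_r, ln_1 in *.
      replace (s / (1 - s ^ 2)) with (2 * s / (1 - s ^ 2) / 2) by (field; nra).
      replace (2 * 0 / (1 - 0 ^ 2)) with 0 in * by (field; lra). lra. }
    apply (le_of_derive_nonneg (fun x => 2 * x / (1 - x ^ 2) - (ln (1 + x) - ln (1 - x)))
             (fun x => 4 * x ^ 2 / (1 - x ^ 2) ^ 2)); [lra | |].
    + intros x Hx. auto_derive; [repeat split; nra|]. field. split; nra.
    + intros x Hx. apply Rmult_le_pos; [nra | apply Rlt_le, Rinv_0_lt_compat, pow_lt; nra].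
Qed.

Lemma nu_of_sq s : 0 <= s < 1 -> nu_of (s ^ 2) = exp (-2 * artanh s).
Proof.
  intros Hs. unfold nu_of, artanh. rewrite sqrt_pow2 by lra.
  replace (-2 * ((ln (1 + s) - ln (1 - s)) / 2)) with (ln (1 - s) + - ln (1 + s)) by field.
  rewrite exp_plus, exp_Ropp, !exp_ln by lra. field. lra.
Qed.

Lemma exp_le_1_add_2x y : 0 <= y <= 1 / 2 -> exp y <= 1 + 2 * y.
Proof.
  intros Hy. pose proof (exp_ineq1_le (- y)). pose proof (exp_pos y).
  pose proof (exp_mul_exp_opp y). assert (exp y * (1 - y) <= 1) by nra. nra.
Qed.

Lemma exp_opp_le b s : 0 < s -> 1 / s <= b -> exp (- b) <= s.
Proof.
  intros Hs Hb. apply Rle_trans with (exp (- (1 / s))).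
  - destruct (Req_dec b (1 / s)) as [->|]; [lra | apply Rlt_le, exp_increasing; lra].
  - rewrite exp_Ropp. pose proof (exp_ineq1 (1 / s) ltac:(apply Rgt_not_eq, Rdiv_lt_0_compat; lra)).
    apply Rmult_le_reg_r with (exp (1 / s)); [apply exp_pos|].
    rewrite Rinv_l by (apply Rgt_not_eq, exp_pos).
    assert (s * (1 + 1 / s) = s + 1) by (field; lra). nra.
Qed.

Lemma coth_csch_exp b : 0 < b ->
  coth_csch b = 2 * exp (- b) * (1 + exp (- b) ^ 2) / (1 - exp (- b) ^ 2) ^ 2.
Proof.
  intros Hb. unfold coth_csch, cosh.
  assert (exp (- b) < 1) by (rewrite <- exp_0; apply exp_increasing; lra).
  pose proof (exp_pos (- b)).
  replace (exp b) with (/ exp (- b)) by (now rewrite exp_Ropp, Rinv_inv).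
  field. repeat split; nra.
Qed.

Lemma coth_csch_ge b : 0 < b -> 2 * exp (- b) <= coth_csch b.
Proof.
  intros Hb. rewrite coth_csch_exp by auto.
  assert (exp (- b) < 1) by (rewrite <- exp_0; apply exp_increasing; lra).
  pose proof (exp_pos (- b)). set (x := exp (- b)) in *.
  apply Rmult_le_reg_r with ((1 - x ^ 2) ^ 2); [apply pow_lt; nra|].
  replace (2 * x * (1 + x ^ 2) / (1 - x ^ 2) ^ 2 * (1 - x ^ 2) ^ 2) with (2 * x * (1 + x ^ 2)) by (field; nra).
  assert (x ^ 2 <= 1) by nra. assert (x ^ 2 * x ^ 2 <= x ^ 2) by nra.
  assert ((1 - x ^ 2) ^ 2 <= 1 + x ^ 2) by nra. apply Rmult_le_compat_l; nra.
Qed.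

Lemma coth_csch_le b X : 0 < b -> exp (- b) <= X < 1 ->
  coth_csch b <= 2 * (1 + X ^ 2) / (1 - X ^ 2) ^ 2 * exp (- b).
Proof.
  intros Hb HX. rewrite coth_csch_exp by auto.
  pose proof (exp_pos (- b)). set (x := exp (- b)) in *.
  assert (x ^ 2 <= X ^ 2) by (apply pow_incr; lra).
  assert (0 < (1 - X ^ 2) ^ 2) by (apply pow_lt; nra).
  assert ((1 - X ^ 2) ^ 2 <= (1 - x ^ 2) ^ 2) by (apply pow_incr; nra).
  unfold Rdiv.
  apply Rle_trans with (2 * x * (1 + X ^ 2) * / (1 - x ^ 2) ^ 2).
  - apply Rmult_le_compat_r; [apply Rlt_le, Rinv_0_lt_compat, pow_lt; nra | nra].
  - replace (2 * (1 + X ^ 2) * / (1 - X ^ 2) ^ 2 * x) with (2 * x * (1 + X ^ 2) * / (1 - X ^ 2) ^ 2) by ring.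
    apply Rmult_le_compat_l; [nra | now apply Rinv_le_contravar].
Qed.

Lemma Series_coth_csch_odd_bounds b : 0 < b ->
  let X := exp (- b) in
  2 * X <= Series (fun n => coth_csch ((2 * INR n + 1) * b)) <= 2 * X * (1 + X ^ 2) / (1 - X ^ 2) ^ 3.
Proof.
  intros Hb X.
  assert (HX : 0 < X < 1) by (unfold X; split; [apply exp_pos | rewrite <- exp_0; apply exp_increasing; lra]).
  assert (Hbpos : forall n, 0 < (2 * INR n + 1) * b) by (intros n; pose proof (pos_INR n); nra).
  assert (Hxn : forall n, exp (- ((2 * INR n + 1) * b)) = X * (X ^ 2) ^ n).
  { intros n. unfold X. rewrite <- pow_mult, exp_pow_INR, <- exp_plus. f_equal. rewrite mult_INR. simpl. ring. }
  assert (Hpow : forall n, 0 <= (X ^ 2) ^ n <= 1).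
  { intros n. split; [apply pow_le; nra | rewrite <- (pow1 n); apply pow_incr; nra]. }
  set (K := 2 * (1 + X ^ 2) / (1 - X ^ 2) ^ 2).
  assert (Hterm : forall n, 0 <= coth_csch ((2 * INR n + 1) * b) <= K * X * (X ^ 2) ^ n).
  { intros n. pose proof (coth_csch_ge _ (Hbpos n)). pose proof (exp_pos (- ((2 * INR n + 1) * b))).
    split; [lra|]. rewrite (Rmult_assoc K X), <- Hxn.
    apply coth_csch_le; auto. rewrite Hxn. specialize (Hpow n). split; nra. }
  assert (HG : is_series (fun n => K * X * (X ^ 2) ^ n) (K * X * / (1 - X ^ 2))).
  { apply (is_series_scal_l (K * X) (fun n => (X ^ 2) ^ n)). apply is_series_geom. rewrite Rabs_right; nra. }
  assert (ET : ex_series (fun n => coth_csch ((2 * INR n + 1) * b))).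
  { apply (ex_series_Rabs_le _ _ (fun n => ltac:(rewrite Rabs_right; [apply Hterm | apply Rle_ge, Hterm]))).
    exists (K * X * / (1 - X ^ 2)). exact HG. }
  split.
  - pose proof (sum_f_R0_le_Series _ 0 (fun n => proj1 (Hterm n)) ET). simpl sum_f_R0 in *.
    pose proof (coth_csch_ge _ (Hbpos 0%nat)). rewrite Hxn in *. simpl pow in *. simpl INR in *. lra.
  - apply Rle_trans with (K * X * / (1 - X ^ 2)).
    + rewrite <- (is_series_unique _ _ HG). apply Series_le; [exact Hterm | now exists (K * X * / (1 - X ^ 2))].
    + right. unfold K. field. nra.
Qed.

Lemma coth_csch_ratio_bounds X S s : 0 < X <= s -> s <= 1 / 22 ->
  2 * X <= S <= 2 * X * (1 + X ^ 2) / (1 - X ^ 2) ^ 3 -> 1 <= S / (2 * X) <= 1 + 8 * s ^ 2.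
Proof.
  intros HX Hs [SL SU].
  assert (HX2 : X ^ 2 <= s ^ 2) by (apply pow_incr; lra).
  assert (0 < (1 - s ^ 2) ^ 3) by (apply pow_lt; nra).
  assert ((1 - s ^ 2) ^ 3 <= (1 - X ^ 2) ^ 3) by (apply pow_incr; nra).
  assert (0 < (1 - X ^ 2) ^ 3) by lra.
  split.
  - apply Rmult_le_reg_r with (2 * X); [lra|]. replace (S / (2 * X) * (2 * X)) with S by (field; lra). lra.
  - apply Rle_trans with ((1 + X ^ 2) / (1 - X ^ 2) ^ 3).
    + apply Rmult_le_reg_r with (2 * X); [lra|].
      replace (S / (2 * X) * (2 * X)) with S by (field; lra).
      replace ((1 + X ^ 2) / (1 - X ^ 2) ^ 3 * (2 * X)) with (2 * X * (1 + X ^ 2) / (1 - X ^ 2) ^ 3)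
        by (field; nra). exact SU.
    + apply Rle_trans with ((1 + s ^ 2) / (1 - s ^ 2) ^ 3).
      * unfold Rdiv. apply Rmult_le_compat; [nra | apply Rlt_le, Rinv_0_lt_compat; lra | lra |].
        now apply Rinv_le_contravar.
      * apply Rmult_le_reg_r with ((1 - s ^ 2) ^ 3); [lra|].
        replace ((1 + s ^ 2) / (1 - s ^ 2) ^ 3 * (1 - s ^ 2) ^ 3) with (1 + s ^ 2) by (field; nra).
        set (t := s ^ 2). assert (0 <= t <= 1 / 484) by (unfold t; split; nra).
        replace ((1 - t) ^ 3) with (1 - 3 * t + 3 * t ^ 2 - t ^ 3) by ring. nra.
Qed.

Lemma exp_artanh_defect_bounds s : 0 < s <= 1 / 22 ->
  1 <= exp (PI ^ 2 * (artanh s - s) / (2 * artanh s * s)) <= 1 + 22 * s.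
Proof.
  intros Hs. pose proof PI_RGT_0. pose proof PI_le_13_4.
  destruct (artanh_bounds s ltac:(lra)) as [Ha1 Ha2]. set (a := artanh s) in *.
  set (e := PI ^ 2 * (a - s) / (2 * a * s)).
  assert (He0 : 0 <= e) by (unfold e; apply Rmult_le_pos; [nra | apply Rlt_le, Rinv_0_lt_compat; nra]).
  assert (He1 : e <= 11 * s).
  { unfold e. apply Rmult_le_reg_r with (2 * a * s); [nra|].
    replace (PI ^ 2 * (a - s) / (2 * a * s) * (2 * a * s)) with (PI ^ 2 * (a - s)) by (field; lra).
    assert (a - s <= s ^ 3 / (1 - s ^ 2)).
    { apply Rle_trans with (s / (1 - s ^ 2) - s); [lra | right; field; nra]. }
    assert (a - s <= 2 * s ^ 3).
    { apply Rle_trans with (s ^ 3 / (1 - s ^ 2)); auto. apply Rmult_le_reg_r with (1 - s ^ 2); [nra|].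
      replace (s ^ 3 / (1 - s ^ 2) * (1 - s ^ 2)) with (s ^ 3) by (field; nra).
      assert (0 <= s ^ 3) by (apply pow_le; lra). assert (s ^ 2 <= 1 / 2) by nra. nra. }
    assert (PI ^ 2 * (a - s) <= 11 * (2 * s ^ 3)) by (apply Rmult_le_compat; nra).
    assert (0 <= s ^ 2 * (a - s)) by (apply Rmult_le_pos; nra). nra. }
  split.
  - rewrite <- exp_0. destruct (Req_dec e 0) as [->|]; [lra | apply Rlt_le, exp_increasing; lra].
  - pose proof (exp_le_1_add_2x e ltac:(split; lra)). lra.
Qed.

Lemma sq_div_artanh_bounds s : 0 < s <= 1 / 22 -> (1 - s ^ 2) ^ 2 <= (s / artanh s) ^ 2 <= 1.
Proof.
  intros Hs. destruct (artanh_bounds s ltac:(lra)) as [Ha1 Ha2]. set (a := artanh s) in *.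
  assert (Ha : 0 < a) by lra.
  split.
  - apply pow_incr. split; [nra|].
    apply Rmult_le_reg_r with (a / (1 - s ^ 2)); [apply Rdiv_lt_0_compat; nra|].
    replace ((1 - s ^ 2) * (a / (1 - s ^ 2))) with a by (field; nra).
    replace (s / a * (a / (1 - s ^ 2))) with (s / (1 - s ^ 2)) by (field; nra). lra.
  - rewrite <- (pow1 2). apply pow_incr. split; [apply Rlt_le, Rdiv_lt_0_compat; lra|].
    apply Rmult_le_reg_r with a; [lra|]. replace (s / a * a) with s by (field; lra). lra.
Qed.

Lemma Gamma_ratio_eq s : 0 < s < 1 ->
  let a := artanh s in let b := PI ^ 2 / (2 * a) in
  Gamma (nu_of (s ^ 2)) / Gamma_asymp (s ^ 2) =
    (s / a) ^ 2 * exp (PI ^ 2 * (a - s) / (2 * a * s)) *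
    (Series (fun n => coth_csch ((2 * INR n + 1) * b)) / (2 * exp (- b))).
Proof.
  intros Hs a b. pose proof PI_RGT_0. pose proof (exp_pos (- b)).
  assert (Ha : 0 < a) by (pose proof (artanh_bounds s ltac:(lra)); unfold a; lra).
  rewrite nu_of_sq, Gamma_exp_eq by (exact Ha || lra). fold a.
  rewrite (Series_ext _ (fun n => coth_csch ((2 * INR n + 1) * b)))
    by (intros n; f_equal; unfold half_odd_pi, b; field; lra).
  unfold Gamma_asymp. rewrite sqrt_pow2 by lra.
  replace (exp (PI ^ 2 * (a - s) / (2 * a * s))) with (exp (- b) / exp (- PI ^ 2 / (2 * s))).
  - pose proof (exp_pos (- PI ^ 2 / (2 * s))). field. repeat split; lra.
  - unfold Rdiv at 1. rewrite <- exp_Ropp, <- exp_plus. f_equal. unfold b. field. lra.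
Qed.

Lemma Gamma_ratio_sub_1_le s : 0 < s <= 1 / 22 ->
  Rabs (Gamma (nu_of (s ^ 2)) / Gamma_asymp (s ^ 2) - 1) <= 60 * s.
Proof.
  intros Hs. pose proof PI_RGT_0. pose proof PI2_3_2.
  rewrite Gamma_ratio_eq by lra.
  destruct (artanh_bounds s ltac:(lra)) as [Ha1 Ha2]. set (a := artanh s) in *.
  set (b := PI ^ 2 / (2 * a)).
  assert (HX : exp (- b) <= s).
  { apply exp_opp_le; [lra|]. unfold b.
    assert (a <= 2 * s).
    { apply Rle_trans with (s / (1 - s ^ 2)); auto. apply Rmult_le_reg_r with (1 - s ^ 2); [nra|].
      replace (s / (1 - s ^ 2) * (1 - s ^ 2)) with s by (field; nra). nra. }
    apply Rmult_le_reg_r with (2 * a * s); [nra|].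
    replace (1 / s * (2 * a * s)) with (2 * a) by (field; lra).
    replace (PI ^ 2 / (2 * a) * (2 * a * s)) with (PI ^ 2 * s) by (field; lra).
    assert (9 <= PI ^ 2) by nra. nra. }
  destruct (coth_csch_ratio_bounds (exp (- b)) _ s ltac:(split; [apply exp_pos | lra]) ltac:(lra)
              (Series_coth_csch_odd_bounds b ltac:(unfold b; apply Rdiv_lt_0_compat; nra)))
    as [Hk1 Hk2].
  destruct (exp_artanh_defect_bounds s Hs) as [HQ1 HQ2].
  destruct (sq_div_artanh_bounds s Hs) as [Hm1 Hm2].
  fold a in HQ1, HQ2, Hm1, Hm2.
  set (m := (s / a) ^ 2) in *.
  set (Q := exp (PI ^ 2 * (a - s) / (2 * a * s))) in *.
  set (k := Series (fun n => coth_csch ((2 * INR n + 1) * b)) / (2 * exp (- b))) in *.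
  assert (Hqk : 1 <= Q * k <= (1 + 22 * s) * (1 + 8 * s ^ 2)) by (split; [nra | apply Rmult_le_compat; lra]).
  apply Rabs_le. split; nra.
Qed.

Lemma filterlim_at_right_0_of_sq_bound (g : R -> R) (l c K : R) : 0 < c -> 0 < K ->
  (forall s, 0 < s <= c -> Rabs (g (s ^ 2) - l) <= K * s) ->
  filterlim g (at_right 0) (locally l).
Proof.
  intros Hc HK Hg. apply filterlim_locally. intros eps.
  assert (HeK : 0 < eps / K) by (apply Rdiv_lt_0_compat; [apply cond_pos | lra]).
  assert (Hd : 0 < Rmin (c ^ 2) ((eps / K) ^ 2)) by (apply Rmin_pos; apply pow_lt; lra).
  exists (mkposreal _ Hd). intros y Hy Hy0.
  assert (Hyd : y < Rmin (c ^ 2) ((eps / K) ^ 2)).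
  { unfold ball in Hy; simpl in Hy; unfold AbsRing_ball, abs, minus, plus, opp in Hy; simpl in Hy.
    rewrite Ropp_0, Rplus_0_r, Rabs_right in Hy by lra. exact Hy. }
  pose proof (Rmin_l (c ^ 2) ((eps / K) ^ 2)) as Hmc. pose proof (Rmin_r (c ^ 2) ((eps / K) ^ 2)) as HmK.
  set (s := sqrt y). assert (Hs : 0 < s) by (apply sqrt_lt_R0; auto).
  assert (Hsy : s ^ 2 = y) by (unfold s; rewrite <- Rsqr_pow2; apply Rsqr_sqrt; lra).
  assert (Hsc : s <= c) by nra.
  assert (HsK : s < eps / K) by nra.
  assert (HKs : K * s < eps).
  { apply Rmult_lt_reg_r with (/ K); [apply Rinv_0_lt_compat; lra|].
    replace (K * s * / K) with s by (field; lra). exact HsK. }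
  pose proof (Hg s ltac:(lra)) as Hgs. rewrite Hsy in Hgs. unfold Rminus in Hgs.
  unfold ball; simpl; unfold AbsRing_ball, abs, minus, plus, opp; simpl. lra.
Qed.

Theorem corollary9 :
  filterlim (fun delta => Gamma (nu_of delta) / Gamma_asymp delta)
            (at_right 0) (locally 1).
Proof.
  apply (filterlim_at_right_0_of_sq_bound _ 1 (1 / 22) 60); [lra | lra |].
  exact Gamma_ratio_sub_1_le.
Qed.
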